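(* Let $m\ge1$ and $0<\alpha<\pi$, and set $h=E_m(2\alpha)$. Then $0<h<2$ and $\delta_m(h)=2\pi-2\alpha$.
   Context: $\Gamma$ is the unit circle of $\mathbb{C}$ with arc-length measure $|\cdot|$; $\mathfrak{P}_m(\Gamma)$ is the set of monic algebraic polynomials of degree $m$ all of whose zeros lie on $\Gamma$. For a compact set $Q\subset\Gamma$, $E_m(Q)=\inf\{\max_{z\in Q}|P(z)|:P\in\mathfrak{P}_m(\Gamma)\}$, and $E_m(2\alpha)=\inf\{E_m(Q):Q\subset\Gamma\text{ compact},|Q|=2\alpha\}$. $\mathbb{T}=[0,2\pi)$ with endpoints identified, with Lebesgue measure $\mathrm{mes}$, and for $0\le h\le2$, $\delta_m(h)=\inf\{\mathrm{mes}\{t\in\mathbb{T}:|P(e^{it})|\ge h\}:P\in\mathfrak{P}_m(\Gamma)\}$. *)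

From Stdlib Require Import Reals List.
Open Scope R_scope.

(* Points of C are represented as pairs (x, y) = x + i y. *)
Definition pt := (R * R)%type.

Definition on_circle (z : pt) : Prop := fst z ^ 2 + snd z ^ 2 = 1.

Definition cdist (z w : pt) : R :=
  sqrt ((fst z - fst w) ^ 2 + (snd z - snd w) ^ 2).

Definition cexp_i (t : R) : pt := (cos t, sin t).

(* A polynomial P in P_m(Gamma): P(z) = prod_k (z - e^{i th_k}), th a list of
   length m of arguments of the zeros. [Pabs ths z] is |P(z)| (the modulus of a
   product is the product of the moduli). *)
Definition Pabs (ths : list R) (z : pt) : R :=
  fold_right (fun th acc => cdist z (cexp_i th) * acc) 1 ths.

Definition in_Pm (m : nat) (ths : list R) : Prop := length ths = m.

Definition is_lower_bound (E : R -> Prop) (l : R) : Prop :=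
  forall x, E x -> l <= x.
Definition is_glb (E : R -> Prop) (l : R) : Prop :=
  is_lower_bound E l /\ (forall b, is_lower_bound E b -> b <= l).
Definition is_max (E : R -> Prop) (v : R) : Prop :=
  E v /\ (forall x, E x -> x <= v).

(* Lebesgue (outer) measure on R: infimum of total lengths of countable covers
   by open intervals. *)
Definition cover_sums (A : R -> Prop) (s : R) : Prop :=
  exists a b : nat -> R,
    (forall n, a n <= b n) /\
    (forall x, A x -> exists n, a n < x < b n) /\
    infinite_sum (fun n => b n - a n) s.
Definition lebesgue_measure (A : R -> Prop) (r : R) : Prop :=
  is_glb (cover_sums A) r.

(* Compact subsets of Gamma: closed subsets of R^2 contained in the unit circle
   (bounded automatically; Heine-Borel). *)
Definition closed2 (Q : pt -> Prop) : Prop :=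
  forall p, ~ Q p -> exists eps, 0 < eps /\
    forall q, (fst q - fst p) ^ 2 + (snd q - snd p) ^ 2 < eps ^ 2 -> ~ Q q.
Definition compact_in_circle (Q : pt -> Prop) : Prop :=
  (forall z, Q z -> on_circle z) /\ closed2 Q.

Definition arc_measure (Q : pt -> Prop) (r : R) : Prop :=
  lebesgue_measure (fun t => 0 <= t < 2 * PI /\ Q (cexp_i t)) r.

Definition E_Q (m : nat) (Q : pt -> Prop) (e : R) : Prop :=
  is_glb (fun v => exists ths, in_Pm m ths /\
                   is_max (fun x => exists z, Q z /\ x = Pabs ths z) v) e.

Definition E_alpha (m : nat) (alpha : R) (e : R) : Prop :=
  is_glb (fun v => exists Q, compact_in_circle Q /\ arc_measure Q (2 * alpha)
                              /\ E_Q m Q v) e.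

Definition delta (m : nat) (h : R) (d : R) : Prop :=
  is_glb (fun v => exists ths, in_Pm m ths /\
            lebesgue_measure (fun t => 0 <= t < 2 * PI /\
                                       Pabs ths (cexp_i t) >= h) v) d.

From Stdlib Require Import Reals List Lra Lia ZArith ClassicalEpsilon Classical.
Import ListNotations.
Open Scope R_scope.

(* Write [F_P(t) = |P(e^it)|].  On the circle [conj z = 1/z], so [|P(z)|^2 = c^2] is a
   polynomial equation of degree [2m] and every level set of [F_P] is finite.  Consequently, if
   [{F_P < h}] has measure [> 2 alpha], it contains a closed set of measure exactly [2 alpha],
   whose arc is admissible for [E_m(2 alpha)], so [E_m(2 alpha) < h].  With [h = E_m(2 alpha)]
   this gives [mes {F_P >= h} >= 2 pi - 2 alpha] for every [P]; with [P = z^m - 1], for which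
   [F_P < 2] off finitely many points, it gives [h < 2].  The bound [h > 0] holds because
   [{F_P < r}] lies near the zeros of [P], with measure small uniformly in [P].  Finally the
   zeros of nearly optimal polynomials accumulate at the zeros of some [P] with
   [mes {F_P <= h + eta} >= 2 alpha] for all [eta > 0]; as the level set [{F_P = h}] is finite,
   [mes {F_P < h} >= 2 alpha], so [P] attains [delta_m(h) = 2 pi - 2 alpha]. *)

(** * Complex numbers and polynomials *)

Definition C := (R * R)%type.
Definition C0 : C := (0, 0).
Definition C1 : C := (1, 0).
Definition Cadd (x y : C) : C := (fst x + fst y, snd x + snd y).
Definition Cmul (x y : C) : C :=
  (fst x * fst y - snd x * snd y, fst x * snd y + snd x * fst y).
Definition Copp (x : C) : C := (- fst x, - snd x).
Definition Csub (x y : C) : C := Cadd x (Copp y).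

Lemma C_ring : ring_theory C0 C1 Cadd Cmul Csub Copp (@eq C).
Proof.
  constructor; intros; repeat match goal with x : C |- _ => destruct x end;
  unfold Csub, Cadd, Cmul, Copp, C0, C1; simpl; f_equal; ring.
Qed.
Add Ring Cring : C_ring.
Arguments Cadd : simpl never.
Arguments Cmul : simpl never.
Arguments Copp : simpl never.
Arguments Csub : simpl never.

Lemma C1_neq_C0 : C1 <> C0.
Proof. unfold C1, C0; intro H; injection H; lra. Qed.

Lemma Cmul_integral : forall x y, Cmul x y = C0 -> x = C0 \/ y = C0.
Proof.
  intros [a b] [c d] H; unfold Cmul, C0 in *; simpl in *.
  injection H as H1 H2.
  destruct (Req_dec (a * a + b * b) 0) as [E|E].
  - left. assert (a * a = 0) by nra. assert (b * b = 0) by nra.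
    apply Rmult_integral in H as [|]; apply Rmult_integral in H0 as [|]; subst; reflexivity.
  - right.
    assert (Hc : (a * a + b * b) * c = a * (a * c - b * d) + b * (a * d + b * c)) by ring.
    assert (Hd : (a * a + b * b) * d = a * (a * d + b * c) - b * (a * c - b * d)) by ring.
    rewrite H1, H2 in Hc, Hd. rewrite !Rmult_0_r, Rplus_0_r in Hc.
    rewrite !Rmult_0_r, Rminus_0_r in Hd.
    apply Rmult_integral in Hc as [|Hc]; [contradiction|].
    apply Rmult_integral in Hd as [|Hd]; [contradiction|]. subst; reflexivity.
Qed.

Fixpoint Cpow (z : C) (k : nat) : C :=
  match k with O => C1 | S k => Cmul z (Cpow z k) end.

Lemma Cpow_C1 : forall n, Cpow C1 n = C1.
Proof. induction n; simpl; [reflexivity|]. rewrite IHn. ring. Qed.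

Lemma Cpow_m1_neq0 : forall n, Cpow (Copp C1) n <> C0.
Proof.
  induction n as [|n IH]; simpl; [exact C1_neq_C0|].
  intro E. apply Cmul_integral in E as [E|E]; [|contradiction].
  unfold Copp, C1, C0 in E; simpl in E. injection E; lra.
Qed.

(* Polynomials are coefficient lists, constant term first. *)
Fixpoint peval (p : list C) (z : C) : C :=
  match p with [] => C0 | a :: l => Cadd a (Cmul z (peval l z)) end.

Definition lead (p : list C) : C := last p C0.

Lemma lead_cons : forall a l, l <> [] -> lead (a :: l) = lead l.
Proof. intros a l H; unfold lead; destruct l; [contradiction|reflexivity]. Qed.

(* Synthetic division: the quotient of [p] by [X - r]. *)
Fixpoint pdiv_lin (p : list C) (r : C) : list C :=
  match p with
  | [] => []
  | a :: l => match l with [] => [] | _ :: _ => peval l r :: pdiv_lin l r end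
  end.

Lemma pdiv_lin_cons2 : forall a b l r,
  pdiv_lin (a :: b :: l) r = peval (b :: l) r :: pdiv_lin (b :: l) r.
Proof. reflexivity. Qed.

Lemma peval_pdiv_lin : forall p r z,
  peval p z = Cadd (Cmul (Csub z r) (peval (pdiv_lin p r) z)) (peval p r).
Proof.
  induction p as [|a [|b l] IH]; intros r z; try (simpl; ring).
  rewrite pdiv_lin_cons2.
  change (peval (a :: b :: l) z) with (Cadd a (Cmul z (peval (b :: l) z))).
  change (peval (a :: b :: l) r) with (Cadd a (Cmul r (peval (b :: l) r))).
  change (peval (peval (b :: l) r :: pdiv_lin (b :: l) r) z)
    with (Cadd (peval (b :: l) r) (Cmul z (peval (pdiv_lin (b :: l) r) z))).
  rewrite (IH r z). ring.
Qed.

Lemma pdiv_lin_length : forall p r, length (pdiv_lin p r) = pred (length p).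
Proof.
  induction p as [|a [|b l] IH]; intros r; try reflexivity.
  rewrite pdiv_lin_cons2. cbn [length]. rewrite IH. reflexivity.
Qed.

Lemma pdiv_lin_lead : forall p r, (2 <= length p)%nat -> lead (pdiv_lin p r) = lead p.
Proof.
  induction p as [|a [|b [|c l]] IH]; intros r H; simpl in H; try lia.
  - rewrite pdiv_lin_cons2. unfold lead; simpl. ring.
  - assert (Hne : pdiv_lin (b :: c :: l) r <> []).
    { intro E. pose proof (pdiv_lin_length (b :: c :: l) r) as HL.
      rewrite E in HL. discriminate. }
    rewrite pdiv_lin_cons2, lead_cons, IH by (simpl; lia || exact Hne).
    rewrite lead_cons by discriminate. reflexivity.
Qed.

Lemma pdiv_lin_roots : forall p r rs, peval p r = C0 -> ~ In r rs ->
  (forall r', In r' rs -> peval p r' = C0) ->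
  forall r', In r' rs -> peval (pdiv_lin p r) r' = C0.
Proof.
  intros p r rs Hr Hnin Hrs r' Hin. pose proof (peval_pdiv_lin p r r') as E.
  rewrite (Hrs r' Hin), Hr in E.
  assert (E' : Cmul (Csub r' r) (peval (pdiv_lin p r) r') = C0) by (rewrite E; ring).
  apply Cmul_integral in E' as [E'|E']; auto.
  exfalso. apply Hnin. replace r with r'; auto.
  transitivity (Cadd (Csub r' r) r); [ring|]. rewrite E'. ring.
Qed.

Lemma poly_roots_le_degree : forall n p, length p = S n -> lead p <> C0 ->
  forall rs, NoDup rs -> (forall r, In r rs -> peval p r = C0) -> (length rs <= n)%nat.
Proof.
  induction n as [|n IH]; intros p Hl Hlead rs Hnd Hr.
  - destruct p as [|a [|b l]]; simpl in Hl; try lia.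
    destruct rs as [|r rs]; simpl; [lia|].
    exfalso. apply Hlead. unfold lead; simpl. rewrite <- (Hr r (or_introl eq_refl)).
    simpl; ring.
  - destruct rs as [|r rs]; simpl; [lia|].
    inversion Hnd as [|? ? Hnin Hnd']; subst.
    apply le_n_S, (IH (pdiv_lin p r)); auto.
    + rewrite pdiv_lin_length, Hl; reflexivity.
    + rewrite pdiv_lin_lead by lia; exact Hlead.
    + apply (pdiv_lin_roots p r rs); auto; intros; apply Hr; simpl; auto.
Qed.

Definition prod_lin (rs : list C) (z : C) : C :=
  fold_right (fun r acc => Cmul (Csub z r) acc) C1 rs.

Lemma prod_lin_app : forall l1 l2 z,
  prod_lin (l1 ++ l2) z = Cmul (prod_lin l1 z) (prod_lin l2 z).
Proof. induction l1; intros; simpl; [ring|]. unfold prod_lin in *; simpl. rewrite IHl1. ring. Qed.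

Lemma monic_poly_factor : forall n p, length p = S n -> lead p = C1 ->
  forall rs, length rs = n -> NoDup rs -> (forall r, In r rs -> peval p r = C0) ->
  forall z, peval p z = prod_lin rs z.
Proof.
  induction n as [|n IH]; intros p Hl Hlead rs Hlr Hnd Hr z.
  - destruct p as [|a [|b l]]; simpl in Hl; try lia.
    destruct rs; simpl in Hlr; try lia. unfold lead in Hlead; simpl in Hlead. subst.
    simpl. ring.
  - destruct rs as [|r rs]; simpl in Hlr; [lia|].
    inversion Hnd as [|? ? Hnin Hnd']; subst.
    rewrite (peval_pdiv_lin p r z), (Hr r (or_introl eq_refl)).
    rewrite (IH (pdiv_lin p r)) with (rs := rs); auto.
    + unfold prod_lin; simpl; ring.
    + rewrite pdiv_lin_length, Hl; reflexivity.
    + rewrite pdiv_lin_lead by lia; exact Hlead.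
    + apply (pdiv_lin_roots p r rs); auto; intros; apply Hr; simpl; auto.
Qed.

Fixpoint padd (p q : list C) : list C :=
  match p, q with
  | [], _ => q | _, [] => p | a :: p', b :: q' => Cadd a b :: padd p' q'
  end.

Lemma peval_padd : forall p q z, peval (padd p q) z = Cadd (peval p z) (peval q z).
Proof. induction p; destruct q; intros; simpl; try rewrite IHp; ring. Qed.

Lemma padd_length : forall p q, length (padd p q) = max (length p) (length q).
Proof. induction p; destruct q; simpl; auto. Qed.

Lemma padd_lead_l : forall p q, (length q < length p)%nat -> lead (padd p q) = lead p.
Proof.
  induction p as [|a p IH]; intros q H; simpl in H; [lia|].
  destruct q as [|b q]; [reflexivity|]. simpl in H. simpl padd.
  destruct p as [|c p]; simpl in H; [lia|].
  rewrite lead_cons. 2:{ intro E. pose proof (padd_length (c :: p) q) as HL.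
    rewrite E in HL. pose proof (Nat.le_max_l (length (c :: p)) (length q)).
    simpl in *. lia. }
  rewrite IH by (simpl in *; lia). symmetry; apply lead_cons; discriminate.
Qed.

Lemma lead_map : forall f l, l <> [] -> lead (map f l) = f (lead l).
Proof.
  intros f l; induction l as [|a [|b l] IH]; intros H; [contradiction|reflexivity|].
  change (map f (a :: b :: l)) with (f a :: map f (b :: l)).
  rewrite !lead_cons, IH by discriminate. reflexivity.
Qed.

Lemma peval_scale : forall s p z, peval (map (Cmul s) p) z = Cmul s (peval p z).
Proof. induction p; intros; simpl; try rewrite IHp; ring. Qed.

Lemma peval_monomial : forall k b z, peval (repeat C0 k ++ [b]) z = Cmul b (Cpow z k).
Proof. induction k; intros; simpl; try rewrite IHk; ring. Qed.

Definition is_poly (n : nat) (a : C) (g : C -> C) : Prop :=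
  exists p, length p = S n /\ lead p = a /\ forall z, g z = peval p z.

Lemma is_poly_roots_le : forall n a g, is_poly n a g -> a <> C0 ->
  forall rs, NoDup rs -> (forall r, In r rs -> g r = C0) -> (length rs <= n)%nat.
Proof.
  intros n a g [p [Hl [Ha Hg]]] Hne rs Hnd Hr.
  apply (poly_roots_le_degree n p Hl); [congruence|auto|].
  intros r Hin; rewrite <- Hg; auto.
Qed.

Lemma is_poly_ext : forall n a g h, is_poly n a g -> (forall z, g z = h z) -> is_poly n a h.
Proof.
  intros n a g h [p [H1 [H2 H3]]] E. exists p; repeat split; auto.
  intro z; rewrite <- E; auto.
Qed.

Lemma is_poly_scale : forall n a g s, is_poly n a g ->
  is_poly n (Cmul s a) (fun z => Cmul s (g z)).
Proof.
  intros n a g s [p [H1 [H2 H3]]]. exists (map (Cmul s) p); repeat split.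
  - rewrite length_map; auto.
  - rewrite lead_map; [congruence|]. intro E; subst; discriminate.
  - intro z; rewrite peval_scale, H3; reflexivity.
Qed.

Lemma is_poly_mul_lin : forall n a g w, is_poly n a g ->
  is_poly (S n) a (fun z => Cmul (Csub z w) (g z)).
Proof.
  intros n a g w [p [H1 [H2 H3]]].
  exists (padd (C0 :: p) (map (Cmul (Copp w)) p)); repeat split.
  - rewrite padd_length, length_map. simpl. rewrite H1. f_equal. lia.
  - rewrite padd_lead_l by (rewrite length_map; simpl; lia).
    rewrite lead_cons; [auto|]. intro E; subst; discriminate.
  - intro z. rewrite peval_padd, peval_scale, H3. simpl. ring.
Qed.

Lemma is_poly_add_monomial : forall n a g k b, is_poly n a g -> (k < n)%nat ->
  is_poly n a (fun z => Cadd (g z) (Cmul b (Cpow z k))).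
Proof.
  intros n a g k b [p [H1 [H2 H3]]] Hk.
  exists (padd p (repeat C0 k ++ [b])); repeat split.
  - rewrite padd_length, length_app, repeat_length; simpl. rewrite H1. lia.
  - rewrite padd_lead_l; auto. rewrite length_app, repeat_length; simpl; lia.
  - intro z; rewrite peval_padd, peval_monomial, H3; reflexivity.
Qed.

Lemma is_poly_prod_lin : forall ws, is_poly (length ws) C1 (prod_lin ws).
Proof.
  induction ws as [|w ws IH].
  - exists [C1]; repeat split. intros; simpl; ring.
  - apply (is_poly_ext _ _ _ _ (is_poly_mul_lin _ _ _ w IH)). reflexivity.
Qed.

(** * Moduli of polynomials on the unit circle *)

Definition rC (r : R) : C := (r, 0).
Definition Cnorm2 (z : C) : R := fst z * fst z + snd z * snd z.

Lemma Cnorm2_mul : forall x y, Cnorm2 (Cmul x y) = Cnorm2 x * Cnorm2 y.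
Proof. intros [a b] [c d]; unfold Cnorm2, Cmul; simpl; ring. Qed.

Lemma Cnorm2_nonneg : forall x, 0 <= Cnorm2 x.
Proof. intros [a b]; unfold Cnorm2; simpl; nra. Qed.

Lemma rC_mul : forall x y, rC (x * y) = Cmul (rC x) (rC y).
Proof. intros; unfold rC, Cmul; simpl; f_equal; ring. Qed.

Lemma cdist_sq : forall z w, cdist z w ^ 2 = (fst z - fst w) ^ 2 + (snd z - snd w) ^ 2.
Proof. intros; unfold cdist; apply pow2_sqrt; apply Rplus_le_le_0_compat; apply pow2_ge_0. Qed.

Lemma cdist_nonneg : forall z w, 0 <= cdist z w.
Proof. intros; unfold cdist; apply sqrt_pos. Qed.

Lemma cdist_refl : forall z, cdist z z = 0.
Proof. intros z. unfold cdist. rewrite !Rminus_diag. simpl. rewrite Rmult_0_l, Rplus_0_r. apply sqrt_0. Qed.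

Lemma cdist_sym : forall z w, cdist z w = cdist w z.
Proof. intros [a b] [c d]; unfold cdist; simpl; f_equal; ring. Qed.

Lemma cdist_Cnorm2 : forall z w, cdist z w = sqrt (Cnorm2 (Csub z w)).
Proof. intros [a b] [c d]; unfold cdist, Cnorm2, Csub, Cadd, Copp; simpl; f_equal; ring. Qed.

Lemma on_circle_cexp : forall t, on_circle (cexp_i t).
Proof. intros t; unfold on_circle, cexp_i; simpl. pose proof (sin2_cos2 t); unfold Rsqr in *; nra. Qed.

Lemma cdist_cexp_sq : forall t th, cdist (cexp_i t) (cexp_i th) ^ 2 = 2 - 2 * cos (t - th).
Proof.
  intros. rewrite cdist_sq. unfold cexp_i; simpl. rewrite cos_minus.
  pose proof (sin2_cos2 t); pose proof (sin2_cos2 th). unfold Rsqr in *. nra.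
Qed.

Lemma cdist_cexp_le_2 : forall t th, cdist (cexp_i t) (cexp_i th) <= 2.
Proof.
  intros t th. pose proof (cdist_cexp_sq t th). pose proof (COS_bound (t - th)).
  pose proof (cdist_nonneg (cexp_i t) (cexp_i th)). nra.
Qed.

(* On the circle [conj z = 1/z], so [|z - w|^2 = (z - w) (1/z - 1/w) = - (z - w)^2 / (z w)]. *)
Lemma circle_cdist_sq : forall z w, on_circle z -> on_circle w ->
  Cmul (Cmul z w) (rC (cdist z w ^ 2)) = Copp (Cmul (Csub z w) (Csub z w)).
Proof.
  intros z w H1 H2. rewrite cdist_sq. destruct z as [a b], w as [c d].
  unfold on_circle in *; cbn [fst snd] in *.
  unfold Cmul, Csub, Cadd, Copp, rC; cbn [fst snd]. f_equal.
  - assert (E : (a*c - b*d) * ((a - c)^2 + (b - d)^2) - 0 * (a*d + b*c)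
        - - ((a + -c) * (a + -c) - (b + -d) * (b + -d))
      = (a*c - b*d) * ((a^2 + b^2 - 1) + (c^2 + d^2 - 1)) + (a^2 + b^2 - 1) * (1 - 2*c^2)
        + (c^2 + d^2 - 1) * (1 - 2*a^2) + 2 * (a^2 + b^2 - 1) * (c^2 + d^2 - 1)) by ring.
    rewrite H1, H2 in E. lra.
  - assert (E : (a*c - b*d) * 0 + (a*d + b*c) * ((a - c)^2 + (b - d)^2)
        - - ((a + -c) * (b + -d) + (b + -d) * (a + -c))
      = (a*d + b*c) * ((a^2 + b^2 - 1) + (c^2 + d^2 - 1)) - 2*c*d*(a^2 + b^2 - 1)
        - 2*a*b*(c^2 + d^2 - 1)) by ring.
    rewrite H1, H2 in E. lra.
Qed.

Lemma Pabs_cons : forall th ths z, Pabs (th :: ths) z = cdist z (cexp_i th) * Pabs ths z.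
Proof. reflexivity. Qed.

Lemma Pabs_nonneg : forall ths z, 0 <= Pabs ths z.
Proof.
  induction ths; intros z; simpl; [lra|].
  apply Rmult_le_pos; [apply cdist_nonneg|apply IHths].
Qed.

Lemma Pabs_Cnorm2 : forall ths z, Pabs ths z = sqrt (Cnorm2 (prod_lin (map cexp_i ths) z)).
Proof.
  induction ths as [|th ths IH]; intros z.
  - simpl. unfold Cnorm2, C1; simpl. replace (1 * 1 + 0 * 0) with 1 by ring.
    rewrite sqrt_1. reflexivity.
  - rewrite Pabs_cons, IH, cdist_Cnorm2. simpl map.
    change (prod_lin (cexp_i th :: map cexp_i ths) z)
      with (Cmul (Csub z (cexp_i th)) (prod_lin (map cexp_i ths) z)).
    rewrite Cnorm2_mul, sqrt_mult; auto using Cnorm2_nonneg.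
Qed.

Definition Cprod (ws : list C) : C := fold_right Cmul C1 ws.

Lemma Pabs_sq_circle : forall ths z, on_circle z ->
  Cmul (Cmul (Cpow z (length ths)) (Cprod (map cexp_i ths))) (rC (Pabs ths z ^ 2)) =
  Cmul (Cpow (Copp C1) (length ths))
       (Cmul (prod_lin (map cexp_i ths) z) (prod_lin (map cexp_i ths) z)).
Proof.
  induction ths as [|th ths IH]; intros z Hz.
  - simpl. unfold rC, Cmul, C1; simpl; f_equal; ring.
  - rewrite Pabs_cons. simpl length. simpl map.
    change (Cpow z (S (length ths))) with (Cmul z (Cpow z (length ths))).
    change (Cpow (Copp C1) (S (length ths)))
      with (Cmul (Copp C1) (Cpow (Copp C1) (length ths))).
    change (Cprod (cexp_i th :: map cexp_i ths))
      with (Cmul (cexp_i th) (Cprod (map cexp_i ths))).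
    change (prod_lin (cexp_i th :: map cexp_i ths) z)
      with (Cmul (Csub z (cexp_i th)) (prod_lin (map cexp_i ths) z)).
    replace ((cdist z (cexp_i th) * Pabs ths z) ^ 2)
      with (cdist z (cexp_i th) ^ 2 * Pabs ths z ^ 2) by ring.
    rewrite rC_mul.
    transitivity (Cmul (Cmul (Cmul z (cexp_i th)) (rC (cdist z (cexp_i th) ^ 2)))
       (Cmul (Cmul (Cpow z (length ths)) (Cprod (map cexp_i ths))) (rC (Pabs ths z ^ 2))));
      [ring|].
    rewrite circle_cdist_sq, IH by auto using on_circle_cexp. ring.
Qed.

(* By [Pabs_sq_circle], every point of the circle where [|P| = c] is a root of this
   polynomial of degree [2 m] and leading coefficient [(-1)^m]. *)
Definition level_poly (ths : list R) (c : R) (z : C) : C :=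
  Cadd (Cmul (Cpow (Copp C1) (length ths))
             (Cmul (prod_lin (map cexp_i ths) z) (prod_lin (map cexp_i ths) z)))
       (Cmul (Copp (Cmul (rC (c ^ 2)) (Cprod (map cexp_i ths)))) (Cpow z (length ths))).

Lemma is_poly_level_poly : forall ths c, (1 <= length ths)%nat ->
  is_poly (length ths + length ths) (Cpow (Copp C1) (length ths)) (level_poly ths c).
Proof.
  intros ths c Hl. unfold level_poly.
  apply is_poly_add_monomial; [|lia].
  replace (Cpow (Copp C1) (length ths)) with (Cmul (Cpow (Copp C1) (length ths)) C1) at 1
    by ring.
  apply is_poly_scale.
  apply (is_poly_ext _ _ (prod_lin (map cexp_i ths ++ map cexp_i ths))).
  - replace (length ths + length ths)%nat with (length (map cexp_i ths ++ map cexp_i ths))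
      by (rewrite length_app, length_map; reflexivity).
    apply is_poly_prod_lin.
  - intros z; apply prod_lin_app.
Qed.

Lemma level_poly_root : forall ths t, level_poly ths (Pabs ths (cexp_i t)) (cexp_i t) = C0.
Proof.
  intros ths t. unfold level_poly.
  rewrite <- (Pabs_sq_circle ths (cexp_i t) (on_circle_cexp t)). ring.
Qed.

Lemma cexp_inj : forall s t, 0 <= s < 2 * PI -> 0 <= t < 2 * PI ->
  cexp_i s = cexp_i t -> s = t.
Proof.
  intros s t Hs Ht E. unfold cexp_i in E. injection E as Ec Esin.
  assert (Hsin : sin (s - t) = 0) by (rewrite sin_minus, Ec, Esin; ring).
  assert (Hcos : cos (s - t) = 1).
  { rewrite cos_minus, Ec, Esin. pose proof (sin2_cos2 t); unfold Rsqr in *; lra. }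
  destruct (sin_eq_0_0 _ Hsin) as [k Hk].
  pose proof PI_RGT_0.
  assert (Hk1 : IZR k < 2) by (apply Rmult_lt_reg_r with PI; lra).
  assert (Hk2 : -2 < IZR k) by (apply Rmult_lt_reg_r with PI; lra).
  apply lt_IZR in Hk1. apply lt_IZR in Hk2.
  assert (Hk3 : (k = 0 \/ k = 1 \/ k = -1)%Z) by lia.
  destruct Hk3 as [H0|[H0|H0]]; subst k; rewrite Hk in Hcos; simpl in *.
  - lra.
  - rewrite Rmult_1_l, cos_PI in Hcos. lra.
  - replace (-1 * PI) with (- PI) in Hcos by ring. rewrite cos_neg, cos_PI in Hcos. lra.
Qed.

Lemma NoDup_map_inj_on : forall {A B : Type} (f : A -> B) (P : A -> Prop) l,
  (forall x y, P x -> P y -> f x = f y -> x = y) -> (forall x, In x l -> P x) ->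
  NoDup l -> NoDup (map f l).
Proof.
  intros A B f P l Hinj HP Hnd. induction Hnd as [|x l Hnin Hnd IH]; simpl; constructor.
  - intro Hin. apply in_map_iff in Hin. destruct Hin as [y [Ey Hy]].
    apply Hnin. replace x with y; auto. apply Hinj; auto; apply HP; simpl; auto.
  - apply IH. intros; apply HP; simpl; auto.
Qed.

Lemma NoDup_map_cexp : forall ts, (forall t, In t ts -> 0 <= t < 2 * PI) ->
  NoDup ts -> NoDup (map cexp_i ts).
Proof. intros ts Hts. apply NoDup_map_inj_on with (P := fun t => 0 <= t < 2 * PI); auto using cexp_inj. Qed.

Lemma level_set_card_le : forall ths c ts, (1 <= length ths)%nat -> NoDup ts ->
  (forall t, In t ts -> 0 <= t < 2 * PI /\ Pabs ths (cexp_i t) = c) ->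
  (length ts <= length ths + length ths)%nat.
Proof.
  intros ths c ts Hl Hnd Hts.
  rewrite <- (length_map cexp_i ts).
  apply (is_poly_roots_le _ _ _ (is_poly_level_poly ths c Hl) (Cpow_m1_neq0 _)).
  - apply NoDup_map_cexp; auto. intros t Ht; apply Hts; auto.
  - intros r Hr. apply in_map_iff in Hr. destruct Hr as [t [<- Ht]].
    destruct (Hts t Ht) as [_ <-]. apply level_poly_root.
Qed.

Lemma de_moivre : forall n a, Cpow (cexp_i a) n = cexp_i (INR n * a).
Proof.
  induction n as [|n IH]; intros a.
  - simpl. unfold cexp_i, C1. rewrite Rmult_0_l, cos_0, sin_0. reflexivity.
  - change (Cpow (cexp_i a) (S n)) with (Cmul (cexp_i a) (Cpow (cexp_i a) n)). rewrite IH.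
    rewrite S_INR. unfold cexp_i, Cmul; simpl.
    replace ((INR n + 1) * a) with (a + INR n * a) by ring.
    rewrite cos_plus, sin_plus. f_equal; ring.
Qed.

Definition unity_args (m : nat) : list R := map (fun k => 2 * PI * INR k / INR m) (seq 0 m).

Lemma unity_args_length : forall m, length (unity_args m) = m.
Proof. intros; unfold unity_args; rewrite length_map, length_seq; reflexivity. Qed.

Lemma unity_args_range : forall m, (1 <= m)%nat ->
  forall th, In th (unity_args m) -> 0 <= th < 2 * PI.
Proof.
  intros m Hm th Hth. unfold unity_args in Hth. apply in_map_iff in Hth.
  destruct Hth as [k [<- Hk]]. apply in_seq in Hk.
  assert (Hm' : 0 < INR m) by (apply lt_0_INR; lia).
  assert (Hk' : INR k < INR m) by (apply lt_INR; lia).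
  pose proof PI_RGT_0. pose proof (pos_INR k). split.
  - apply Rmult_le_pos; [nra|]. left; apply Rinv_0_lt_compat; auto.
  - apply Rmult_lt_reg_r with (INR m); auto. unfold Rdiv.
    rewrite Rmult_assoc, Rinv_l by lra. nra.
Qed.

Lemma unity_args_NoDup : forall m, (1 <= m)%nat -> NoDup (unity_args m).
Proof.
  intros m Hm. unfold unity_args.
  apply (NoDup_map_inj_on _ (fun _ => True)); [|auto|apply seq_NoDup].
  intros x y _ _ E. assert (Hm' : 0 < INR m) by (apply lt_0_INR; lia). pose proof PI_RGT_0.
  apply INR_eq. apply Rmult_eq_reg_l with (2 * PI / INR m).
  - unfold Rdiv in *. lra.
  - apply Rgt_not_eq. unfold Rdiv. apply Rmult_lt_0_compat; [lra|apply Rinv_0_lt_compat; lra].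
Qed.

Lemma unity_args_pow : forall m, (1 <= m)%nat ->
  forall th, In th (unity_args m) -> Cpow (cexp_i th) m = C1.
Proof.
  intros m Hm th Hth. unfold unity_args in Hth. apply in_map_iff in Hth.
  destruct Hth as [k [<- _]].
  rewrite de_moivre. assert (Hm' : 0 < INR m) by (apply lt_0_INR; lia).
  replace (INR m * (2 * PI * INR k / INR m)) with (INR k * (2 * PI)) by (field; lra).
  rewrite <- de_moivre. replace (cexp_i (2 * PI)) with C1.
  - apply Cpow_C1.
  - unfold cexp_i, C1; rewrite cos_2PI, sin_2PI; reflexivity.
Qed.

Lemma unity_roots_factor : forall m, (1 <= m)%nat -> forall z,
  Cadd (Cpow z m) (Copp C1) = prod_lin (map cexp_i (unity_args m)) z.
Proof.
  intros m Hm.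
  assert (HP : is_poly m C1 (fun z => Cadd (Cpow z m) (Cmul (Copp C1) (Cpow z 0)))).
  { apply is_poly_add_monomial; [|lia].
    apply (is_poly_ext _ _ (prod_lin (repeat C0 m))).
    - pose proof (is_poly_prod_lin (repeat C0 m)) as H. rewrite repeat_length in H. exact H.
    - intro z. clear Hm. induction m as [|m IHm]; [reflexivity|].
      unfold prod_lin in *; simpl. rewrite IHm. ring. }
  destruct HP as [p [Hl [Hlead Hev]]].
  intros z. replace (Cadd (Cpow z m) (Copp C1)) with (peval p z) by (rewrite <- Hev; simpl; ring).
  apply (monic_poly_factor m p Hl Hlead).
  - rewrite length_map; apply unity_args_length.
  - apply NoDup_map_cexp; [apply unity_args_range | apply unity_args_NoDup]; exact Hm.
  - intros r Hr. rewrite <- Hev. apply in_map_iff in Hr. destruct Hr as [th [<- Hth]].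
    rewrite (unity_args_pow m Hm th Hth). simpl. ring.
Qed.

Lemma Pabs_unity_le_2 : forall m, (1 <= m)%nat ->
  forall t, Pabs (unity_args m) (cexp_i t) <= 2.
Proof.
  intros m Hm t. rewrite Pabs_Cnorm2, <- unity_roots_factor by auto.
  rewrite de_moivre. unfold cexp_i, Cnorm2, Cadd, Copp, C1; simpl.
  set (a := INR m * t). pose proof (sin2_cos2 a). pose proof (COS_bound a). unfold Rsqr in *.
  rewrite <- (sqrt_pow2 2) by lra. apply sqrt_le_1_alt. nra.
Qed.

(** * Lebesgue outer measure on the line *)

Lemma glb_exists : forall (E : R -> Prop), (exists x, E x) -> (exists b, is_lower_bound E b) ->
  exists l, is_glb E l.
Proof.
  intros E [x Ex] [b Hb].
  assert (Hub : bound (fun y => E (- y))).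
  { exists (- b). intros y Hy. specialize (Hb _ Hy). lra. }
  assert (Hne : exists y, E (- y)) by (exists (- x); rewrite Ropp_involutive; auto).
  destruct (completeness _ Hub Hne) as [l [Hl1 Hl2]].
  exists (- l). split.
  - intros z Hz. assert (- z <= l) by (apply Hl1; rewrite Ropp_involutive; auto). lra.
  - intros c Hc. assert (l <= - c); [|lra].
    apply Hl2. intros y Hy. specialize (Hc _ Hy). lra.
Qed.

Lemma glb_unique : forall E l1 l2, is_glb E l1 -> is_glb E l2 -> l1 = l2.
Proof. intros E l1 l2 [H1 H1'] [H2 H2']. apply Rle_antisym; [apply H2'|apply H1']; auto. Qed.

Lemma glb_approx : forall E l, is_glb E l -> forall eps, 0 < eps -> exists x, E x /\ x < l + eps.
Proof.
  intros E l [H1 H2] eps Heps. apply NNPP. intro Hn.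
  assert (is_lower_bound E (l + eps)).
  { intros x Ex. apply Rnot_lt_le. intro Hlt. apply Hn. exists x; auto. }
  specialize (H2 _ H). lra.
Qed.

Lemma psum_growing : forall f, (forall n, 0 <= f n) -> Un_growing (sum_f_R0 f).
Proof. intros f Hf n. simpl. specialize (Hf (S n)). lra. Qed.

Lemma psum_nonneg : forall f, (forall n, 0 <= f n) -> forall N, 0 <= sum_f_R0 f N.
Proof. intros f Hf N; induction N; simpl; [apply Hf|]. specialize (Hf (S N)); lra. Qed.

Lemma psum_le_N : forall f, (forall n, 0 <= f n) ->
  forall N M, (N <= M)%nat -> sum_f_R0 f N <= sum_f_R0 f M.
Proof. intros f Hf N M H. induction H; [lra|]. simpl. specialize (Hf (S m)). lra. Qed.

Lemma psum_le_sum : forall f s, (forall n, 0 <= f n) -> infinite_sum f s ->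
  forall N, sum_f_R0 f N <= s.
Proof. intros f s Hf Hs N. apply growing_ineq; auto. apply psum_growing; auto. Qed.

Lemma psum_bounded_cv : forall f B, (forall n, 0 <= f n) -> (forall N, sum_f_R0 f N <= B) ->
  exists s, infinite_sum f s /\ s <= B.
Proof.
  intros f B Hf HB.
  destruct (growing_cv (sum_f_R0 f)) as [s Hs].
  - apply psum_growing; auto.
  - exists B. intros x [i ->]. apply HB.
  - exists s. split; [exact Hs|].
    apply Rle_cv_lim with (sum_f_R0 f) (fun _ => B); auto.
    intros eps Heps. exists O. intros. unfold Rdist. rewrite Rminus_diag, Rabs_R0. auto.
Qed.

Lemma infinite_sum_ext : forall f g s, (forall n, f n = g n) ->
  infinite_sum f s -> infinite_sum g s.
Proof.
  intros f g s E H eps Heps. destruct (H eps Heps) as [N HN]. exists N. intros n Hn.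
  rewrite <- (sum_eq f g n) by auto. auto.
Qed.

Lemma infinite_sum_split : forall f g s, (forall n, 0 <= f n) -> (forall n, 0 <= g n) ->
  infinite_sum (fun n => f n + g n) s ->
  exists sf sg, infinite_sum f sf /\ infinite_sum g sg /\ sf + sg = s.
Proof.
  intros f g s Hf Hg Hs.
  assert (Hsum : forall N, sum_f_R0 f N + sum_f_R0 g N = sum_f_R0 (fun n => f n + g n) N).
  { induction N; simpl; [ring|]. rewrite <- IHN. ring. }
  assert (Hle : forall N, sum_f_R0 (fun n => f n + g n) N <= s).
  { apply psum_le_sum; auto. intro n; specialize (Hf n); specialize (Hg n); lra. }
  destruct (psum_bounded_cv f s Hf) as [sf [Hsf _]].
  { intro N. specialize (Hle N). pose proof (psum_nonneg g Hg N). rewrite <- Hsum in Hle. lra. }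
  destruct (psum_bounded_cv g s Hg) as [sg [Hsg _]].
  { intro N. specialize (Hle N). pose proof (psum_nonneg f Hf N). rewrite <- Hsum in Hle. lra. }
  exists sf, sg. repeat split; auto.
  apply (UL_sequence (sum_f_R0 (fun n => f n + g n))); auto.
  eapply Un_cv_ext; [|apply (CV_plus _ _ _ _ Hsf Hsg)]. intro n. apply Hsum.
Qed.

Lemma cover_sums_nonneg : forall A s, cover_sums A s -> 0 <= s.
Proof.
  intros A s [a [b [Hab [_ Hs]]]].
  apply Rle_trans with (sum_f_R0 (fun n => b n - a n) O).
  - simpl. specialize (Hab O). lra.
  - apply psum_le_sum; auto. intro n; specialize (Hab n); lra.
Qed.

Lemma measure_le_cover : forall A r (a b : nat -> R) B, lebesgue_measure A r ->
  (forall n, a n <= b n) -> (forall x, A x -> exists n, a n < x < b n) ->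
  (forall N, sum_f_R0 (fun n => b n - a n) N <= B) -> r <= B.
Proof.
  intros A r a b B [Hr _] Hab Hcov HB.
  destruct (psum_bounded_cv (fun n => b n - a n) B) as [s [Hs HsB]]; auto.
  - intro n; specialize (Hab n); lra.
  - apply Rle_trans with s; auto. apply Hr. exists a, b; auto.
Qed.

Lemma measure_cover_approx : forall A r, lebesgue_measure A r -> forall eps, 0 < eps ->
  exists a b : nat -> R, (forall n, a n <= b n) /\ (forall x, A x -> exists n, a n < x < b n) /\
    (forall N, sum_f_R0 (fun n => b n - a n) N <= r + eps).
Proof.
  intros A r Hr eps Heps.
  destruct (glb_approx _ _ Hr eps Heps) as [s [[a [b [Hab [Hcov Hs]]]] Hlt]].
  exists a, b. repeat split; auto. intro N.
  apply Rle_trans with s; [|lra]. apply psum_le_sum; auto. intro n; specialize (Hab n); lra.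
Qed.

Definition bounded (A : R -> Prop) : Prop := exists lo hi, forall x, A x -> lo <= x <= hi.

Lemma bounded_sub : forall A B, bounded B -> (forall x, A x -> B x) -> bounded A.
Proof. intros A B [lo [hi H]] Hs. exists lo, hi. auto. Qed.

Lemma bounded_union : forall A B, bounded A -> bounded B -> bounded (fun x => A x \/ B x).
Proof.
  intros A B [l1 [h1 H1]] [l2 [h2 H2]]. exists (Rmin l1 l2), (Rmax h1 h2).
  intros x [Hx|Hx]; [specialize (H1 x Hx)|specialize (H2 x Hx)];
  pose proof (Rmin_l l1 l2); pose proof (Rmin_r l1 l2);
  pose proof (Rmax_l h1 h2); pose proof (Rmax_r h1 h2); lra.
Qed.

Lemma bounded_interval : forall lo hi, bounded (fun t => lo <= t <= hi).
Proof. intros lo hi. exists lo, hi. auto. Qed.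

Lemma bounded_in_interval : forall (P : R -> Prop) lo hi, bounded (fun t => lo <= t <= hi /\ P t).
Proof. intros P lo hi. exists lo, hi. intros x [H _]; auto. Qed.

Lemma bounded_in_period : forall (P : R -> Prop), bounded (fun t => 0 <= t < 2 * PI /\ P t).
Proof. intros P. exists 0, (2 * PI). intros x [H _]; lra. Qed.

Lemma bounded_In : forall l, bounded (fun x => In x l).
Proof.
  induction l as [|z l [lo [hi H]]]; [exists 0, 0; intros y []|].
  exists (Rmin z lo), (Rmax z hi). intros y [<-|Hy].
  - pose proof (Rmin_l z lo); pose proof (Rmax_l z hi); lra.
  - specialize (H y Hy). pose proof (Rmin_r z lo); pose proof (Rmax_r z hi); lra.
Qed.

(* The cover by the single interval [(lo, hi)] is [(single_cover lo, single_cover hi)]. *)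
Definition single_cover (x : R) (n : nat) : R := match n with O => x | _ => 0 end.

Lemma single_cover_sum : forall lo hi N,
  sum_f_R0 (fun n => single_cover hi n - single_cover lo n) N = hi - lo.
Proof. intros lo hi N; induction N; simpl; auto. rewrite IHN. ring. Qed.

Lemma single_cover_le : forall lo hi, lo <= hi -> forall n, single_cover lo n <= single_cover hi n.
Proof. intros lo hi H [|n]; simpl; lra. Qed.

Lemma measure_exists : forall A, bounded A -> exists r, lebesgue_measure A r.
Proof.
  intros A [lo [hi H]]. apply glb_exists.
  - set (a0 := lo - 1). set (b0 := Rmax lo hi + 1).
    assert (Hab : a0 <= b0) by (unfold a0, b0; pose proof (Rmax_l lo hi); lra).
    destruct (psum_bounded_cv (fun n => single_cover b0 n - single_cover a0 n) (b0 - a0))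
      as [s [Hs _]].
    + intro n; pose proof (single_cover_le a0 b0 Hab n); lra.
    + intro N. rewrite single_cover_sum. lra.
    + exists s, (single_cover a0), (single_cover b0). repeat split; auto.
      * apply single_cover_le; auto.
      * intros x Ax. exists O. specialize (H x Ax). simpl.
        unfold a0, b0. pose proof (Rmax_r lo hi); lra.
  - exists 0. intros s Hs. eapply cover_sums_nonneg; eauto.
Qed.

(* [mu A] is the outer measure of [A] whenever it exists (e.g. for bounded [A]), and [0]
   otherwise. *)
Definition mu (A : R -> Prop) : R :=
  match excluded_middle_informative (exists r, lebesgue_measure A r) with
  | left H => proj1_sig (constructive_indefinite_description _ H)
  | right _ => 0
  end.

Lemma mu_unique : forall A r, lebesgue_measure A r -> mu A = r.
Proof.
  intros A r Hr. unfold mu. destruct (excluded_middle_informative _) as [H|H].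
  - apply (glb_unique (cover_sums A)); auto.
    apply (proj2_sig (constructive_indefinite_description _ H)).
  - exfalso; apply H; eauto.
Qed.

Lemma mu_spec : forall A, bounded A -> lebesgue_measure A (mu A).
Proof.
  intros A HA. destruct (measure_exists A HA) as [r Hr]. rewrite (mu_unique A r Hr). exact Hr.
Qed.

Lemma mu_nonneg : forall A, bounded A -> 0 <= mu A.
Proof.
  intros A HA. destruct (mu_spec A HA) as [_ H]. apply H.
  intros s Hs. eapply cover_sums_nonneg; eauto.
Qed.

Lemma mu_mono : forall A B, bounded B -> (forall x, A x -> B x) -> mu A <= mu B.
Proof.
  intros A B HB Hs. assert (HA : bounded A) by (eapply bounded_sub; eauto).
  destruct (mu_spec B HB) as [_ H]. apply H. intros s [a [b [Hab [Hcov Hsum]]]].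
  destruct (mu_spec A HA) as [H1 _]. apply H1. exists a, b; repeat split; auto.
Qed.

Lemma mu_ext : forall A B, bounded B -> (forall x, A x <-> B x) -> mu A = mu B.
Proof.
  intros A B HB E. assert (HA : bounded A) by (eapply bounded_sub; eauto; intros; apply E; auto).
  apply Rle_antisym; apply mu_mono; auto; intros; apply E; auto.
Qed.

Lemma mu_le_interval : forall A lo hi, lo <= hi -> (forall x, A x -> lo <= x <= hi) ->
  mu A <= hi - lo.
Proof.
  intros A lo hi Hlh H. assert (HA : bounded A) by (exists lo, hi; auto).
  apply Rnot_lt_le. intro Hlt. set (e := (mu A - (hi - lo)) / 4).
  assert (He : 0 < e) by (unfold e; lra).
  assert (mu A <= (hi + e) - (lo - e)); [|unfold e in *; lra].
  apply (measure_le_cover A (mu A) (single_cover (lo - e)) (single_cover (hi + e))); auto.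
  - apply mu_spec; auto.
  - apply single_cover_le; lra.
  - intros x Ax. exists O. simpl. specialize (H x Ax). lra.
  - intro N. rewrite single_cover_sum. lra.
Qed.

Lemma mu_empty : forall A, (forall x, ~ A x) -> mu A = 0.
Proof.
  intros A H. apply Rle_antisym.
  - replace 0 with (0 - 0) by ring. apply mu_le_interval; [lra|]. intros x Ax; destruct (H x Ax).
  - apply mu_nonneg. exists 0, 0. intros x Ax; destruct (H x Ax).
Qed.

Definition interleave (a1 a2 : nat -> R) (n : nat) : R :=
  if Nat.even n then a1 (Nat.div2 n) else a2 (Nat.div2 n).

Lemma interleave_even : forall a1 a2 k, interleave a1 a2 (2 * k) = a1 k.
Proof. intros; unfold interleave. rewrite Nat.even_even, Nat.div2_double. reflexivity. Qed.

Lemma interleave_odd : forall a1 a2 k, interleave a1 a2 (S (2 * k)) = a2 k.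
Proof.
  intros; unfold interleave.
  rewrite Nat.even_succ, <- Nat.negb_even, Nat.even_even, Nat.div2_succ_double. reflexivity.
Qed.

Lemma interleave_sum : forall a1 b1 a2 b2 N,
  sum_f_R0 (fun n => interleave b1 b2 n - interleave a1 a2 n) (S (2 * N)) =
  sum_f_R0 (fun n => b1 n - a1 n) N + sum_f_R0 (fun n => b2 n - a2 n) N.
Proof.
  intros. induction N.
  - simpl. unfold interleave; simpl. ring.
  - replace (S (2 * S N)) with (S (S (S (2 * N)))) by lia.
    rewrite tech5, tech5, IHN. simpl sum_f_R0.
    replace (S (S (2 * N))) with (2 * S N)%nat by lia.
    rewrite !interleave_even, !interleave_odd. ring.
Qed.

Lemma mu_union_le : forall A B, bounded A -> bounded B ->
  mu (fun x => A x \/ B x) <= mu A + mu B.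
Proof.
  intros A B HA HB. apply Rnot_lt_le. intro Hlt.
  set (e := (mu (fun x => A x \/ B x) - (mu A + mu B)) / 4). assert (He : 0 < e) by (unfold e; lra).
  destruct (measure_cover_approx A (mu A) (mu_spec A HA) e He) as [a1 [b1 [H1 [C1 S1]]]].
  destruct (measure_cover_approx B (mu B) (mu_spec B HB) e He) as [a2 [b2 [H2 [C2 S2]]]].
  assert (mu (fun x => A x \/ B x) <= mu A + e + (mu B + e)); [|unfold e in *; lra].
  apply (measure_le_cover (fun x => A x \/ B x) _ (interleave a1 a2) (interleave b1 b2)).
  - apply mu_spec, bounded_union; auto.
  - intro n. unfold interleave. destruct (Nat.even n); auto.
  - intros x [Ax|Bx].
    + destruct (C1 x Ax) as [n Hn]. exists (2 * n)%nat. rewrite !interleave_even. auto.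
    + destruct (C2 x Bx) as [n Hn]. exists (S (2 * n)). rewrite !interleave_odd. auto.
  - intro N.
    apply Rle_trans with (sum_f_R0 (fun n => interleave b1 b2 n - interleave a1 a2 n) (S (2 * N))).
    + apply psum_le_N; [|lia]. intro n. unfold interleave.
      destruct (Nat.even n); [specialize (H1 (Nat.div2 n))|specialize (H2 (Nat.div2 n))]; lra.
    + rewrite interleave_sum. specialize (S1 N). specialize (S2 N). lra.
Qed.

Lemma mu_finite : forall l, mu (fun x => In x l) = 0.
Proof.
  induction l as [|x l IH]; [apply mu_empty; intros x []|].
  apply Rle_antisym; [|apply mu_nonneg, bounded_In].
  apply Rle_trans with (mu (fun y => x <= y <= x) + mu (fun y => In y l)).
  - rewrite (mu_ext (fun y => In y (x :: l)) (fun y => x <= y <= x \/ In y l)).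
    + apply mu_union_le; auto using bounded_interval, bounded_In.
    + apply bounded_union; auto using bounded_interval, bounded_In.
    + intro y; simpl; split; intros [H|H]; auto; left; lra.
  - rewrite IH. assert (mu (fun y => x <= y <= x) <= x - x) by (apply mu_le_interval; auto; lra).
    lra.
Qed.

Definition sumlen (L : list (R * R)) : R := fold_right (fun p acc => (snd p - fst p) + acc) 0 L.

Lemma sumlen_app : forall L1 L2, sumlen (L1 ++ L2) = sumlen L1 + sumlen L2.
Proof. induction L1; intros; simpl; [ring|]. rewrite IHL1; ring. Qed.

Lemma sumlen_nonneg : forall L, (forall p, In p L -> fst p <= snd p) -> 0 <= sumlen L.
Proof.
  induction L as [|p L IH]; intros H; simpl; [lra|].
  assert (fst p <= snd p) by (apply H; simpl; auto).
  assert (0 <= sumlen L) by (apply IH; intros; apply H; simpl; auto). lra.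
Qed.

(* Induction on the number of intervals: the one containing [lo] reaches some [b], and the
   others must cover [[b, hi]]. *)
Lemma finite_cover_length_ge : forall n L, (length L <= n)%nat ->
  (forall p, In p L -> fst p <= snd p) ->
  forall lo hi, (forall y, lo <= y <= hi -> exists p, In p L /\ fst p < y < snd p) ->
  hi - lo <= sumlen L.
Proof.
  induction n as [|n IH]; intros L Hl Hp lo hi Hc.
  - destruct L; simpl in Hl; [|lia].
    destruct (Rle_dec lo hi) as [H|H]; [|simpl; lra].
    destruct (Hc lo) as [p [[] _]]; lra.
  - destruct (Rle_dec lo hi) as [H|H]; [|pose proof (sumlen_nonneg L Hp); lra].
    destruct (Hc lo) as [[a b] [Hin Hab]]; [lra|]. simpl in Hab.
    destruct (in_split _ _ Hin) as [L1 [L2 ->]].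
    assert (HpL : forall q, In q (L1 ++ L2) -> fst q <= snd q).
    { intros q Hq. apply Hp. apply in_app_iff in Hq. apply in_app_iff. simpl. tauto. }
    pose proof (sumlen_nonneg _ HpL) as HL12.
    rewrite sumlen_app in *. simpl.
    destruct (Rlt_dec hi b) as [Hb|Hb]; [lra|].
    assert (hi - b <= sumlen (L1 ++ L2)); [|rewrite sumlen_app in *; lra].
    apply (IH (L1 ++ L2)); auto.
    + rewrite length_app in *. simpl in Hl. lia.
    + intros y Hy. destruct (Hc y) as [q [Hq Hqy]]; [lra|].
      exists q. split; auto. apply in_app_iff in Hq. apply in_app_iff. simpl in Hq.
      destruct Hq as [Hq|[<-|Hq]]; auto. simpl in Hqy. lra.
Qed.

Lemma interval_family_cond : forall (a b : nat -> R) x,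
  (exists y, (fun x y => exists n, x = INR n /\ a n < y < b n) x y) ->
  (fun x => exists n : nat, x = INR n) x.
Proof. intros a b x [y [n [Hn _]]]. exists n; auto. Qed.

Definition interval_family (a b : nat -> R) : family :=
  mkfamily (fun x => exists n : nat, x = INR n)
    (fun x y => exists n, x = INR n /\ a n < y < b n) (interval_family_cond a b).

Lemma finite_subcover : forall (a b : nat -> R) lo hi,
  (forall y, lo <= y <= hi -> exists n, a n < y < b n) ->
  exists N, forall y, lo <= y <= hi -> exists n, (n <= N)%nat /\ a n < y < b n.
Proof.
  intros a b lo hi Hc.
  destruct (compact_P3 lo hi (interval_family a b)) as [D [Hcov [l Hl]]].
  - split.
    + intros y Hy. destruct (Hc y Hy) as [n Hn]. exists (INR n). simpl. exists n; auto.
    + intros x y [n [Hx Hy]].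
      assert (Hd : 0 < Rmin (y - a n) (b n - y)) by (apply Rmin_glb_lt; lra).
      exists (mkposreal _ Hd). intros z Hz. unfold disc in Hz. simpl in Hz. exists n. split; auto.
      pose proof (Rmin_l (y - a n) (b n - y)). pose proof (Rmin_r (y - a n) (b n - y)).
      apply Rabs_def2 in Hz. lra.
  - assert (HN : exists N, forall x, In x l -> x <= INR N).
    { clear Hl. induction l as [|x l [N1 HN1]]; [exists O; intros x []|].
      destruct (INR_unbounded x) as [N2 HN2].
      exists (max N1 N2). intros z [<-|Hz].
      + apply Rle_trans with (INR N2); [lra|]. apply le_INR; lia.
      + apply Rle_trans with (INR N1); auto. apply le_INR; lia. }
    destruct HN as [N HN]. exists N. intros y Hy.
    destruct (Hcov y Hy) as [x [[n [-> Hn]] HD]].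
    exists n. split; auto. apply INR_le, HN, Hl. split; auto. exists n; auto.
Qed.

Lemma sumlen_seq : forall (a b : nat -> R) N,
  sumlen (map (fun n => (a n, b n)) (seq 0 (S N))) = sum_f_R0 (fun n => b n - a n) N.
Proof.
  intros a b N. induction N; [simpl; ring|].
  rewrite seq_S, map_app, sumlen_app, IHN. simpl. ring.
Qed.

Lemma cover_sums_ge_interval : forall A lo hi s, (forall y, lo <= y <= hi -> A y) ->
  cover_sums A s -> hi - lo <= s.
Proof.
  intros A lo hi s HA [a [b [Hab [Hcov Hs]]]].
  destruct (finite_subcover a b lo hi) as [N HN]; [intros y Hy; apply Hcov, HA; auto|].
  apply Rle_trans with (sum_f_R0 (fun n => b n - a n) N).
  - rewrite <- sumlen_seq. apply (finite_cover_length_ge _ _ (le_n _)).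
    + intros p Hp. apply in_map_iff in Hp. destruct Hp as [n [<- _]]. simpl; auto.
    + intros y Hy. destruct (HN y Hy) as [n [Hn Hy']]. exists (a n, b n). split; auto.
      apply in_map_iff. exists n; split; auto. apply in_seq. lia.
  - apply psum_le_sum; auto. intro n; specialize (Hab n); lra.
Qed.

Lemma mu_ge_interval : forall A lo hi, bounded A -> (forall y, lo <= y <= hi -> A y) ->
  hi - lo <= mu A.
Proof.
  intros A lo hi HA H. destruct (mu_spec A HA) as [_ Hg]. apply Hg.
  intros s Hs. eapply cover_sums_ge_interval; eauto.
Qed.

Lemma mu_period : mu (fun t => 0 <= t < 2 * PI) = 2 * PI.
Proof.
  pose proof PI_RGT_0. apply Rle_antisym.
  - assert (mu (fun t => 0 <= t < 2 * PI) <= 2 * PI - 0) by (apply mu_le_interval; intros; lra).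
    lra.
  - apply Rnot_lt_le. intro Hlt.
    set (e := (2 * PI - mu (fun t => 0 <= t < 2 * PI)) / 2).
    assert (2 * PI - e - 0 <= mu (fun t => 0 <= t < 2 * PI)); [|unfold e in *; lra].
    apply mu_ge_interval; [exists 0, (2 * PI); intros; lra|].
    intros y Hy. assert (0 < e) by (unfold e; lra). lra.
Qed.

(* A cover of [A \/ B] splits, by clipping at [c], into covers of [A] and of [B]. *)
Lemma mu_union_separated : forall A B c, bounded A -> bounded B ->
  (forall x, A x -> x < c) -> (forall x, B x -> c < x) ->
  mu A + mu B <= mu (fun x => A x \/ B x).
Proof.
  intros A B c HA HB HAc HBc.
  destruct (mu_spec _ (bounded_union A B HA HB)) as [_ Hg]. apply Hg.
  intros s [a [b [Hab [Hcov Hs]]]].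
  destruct (infinite_sum_split (fun n => Rmin (b n) c - Rmin (a n) c)
              (fun n => Rmax (b n) c - Rmax (a n) c) s) as [s1 [s2 [Hs1 [Hs2 <-]]]].
  - intro n. pose proof (Rle_min_compat_r (a n) (b n) c (Hab n)). lra.
  - intro n. pose proof (Rle_max_compat_r (a n) (b n) c (Hab n)). lra.
  - eapply infinite_sum_ext; [|exact Hs]. intro n. unfold Rmin, Rmax.
    destruct (Rle_dec (b n) c), (Rle_dec (a n) c); ring.
  - apply Rplus_le_compat.
    + destruct (mu_spec A HA) as [H1 _]. apply H1.
      exists (fun n => Rmin (a n) c), (fun n => Rmin (b n) c). repeat split; auto.
      * intro n. apply Rle_min_compat_r. auto.
      * intros x Ax. destruct (Hcov x (or_introl Ax)) as [n Hn]. exists n.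
        specialize (HAc x Ax). unfold Rmin. destruct (Rle_dec (a n) c), (Rle_dec (b n) c); lra.
    + destruct (mu_spec B HB) as [H1 _]. apply H1.
      exists (fun n => Rmax (a n) c), (fun n => Rmax (b n) c). repeat split; auto.
      * intro n. apply Rle_max_compat_r. auto.
      * intros x Bx. destruct (Hcov x (or_intror Bx)) as [n Hn]. exists n.
        specialize (HBc x Bx). unfold Rmax. destruct (Rle_dec (a n) c), (Rle_dec (b n) c); lra.
Qed.

Lemma mu_le_split_at : forall A z, bounded A -> ~ A z ->
  mu A <= mu (fun x => A x /\ x < z) + mu (fun x => A x /\ z < x).
Proof.
  intros A z HA Hz.
  assert (HA1 : bounded (fun x => A x /\ x < z)) by (apply (bounded_sub _ A); tauto).
  assert (HA2 : bounded (fun x => A x /\ z < x)) by (apply (bounded_sub _ A); tauto).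
  eapply Rle_trans; [|apply mu_union_le; auto].
  apply mu_mono; [apply bounded_union; auto|]. intros x Ax.
  destruct (Rtotal_order x z) as [H|[<-|H]]; tauto.
Qed.

Lemma mu_le_remove_finite : forall A l, bounded A -> mu A <= mu (fun x => A x /\ ~ In x l).
Proof.
  intros A l HA.
  assert (HA' : bounded (fun x => A x /\ ~ In x l)) by (apply (bounded_sub _ A); tauto).
  eapply Rle_trans; [|rewrite <- (Rplus_0_r (mu _)), <- (mu_finite l);
                      apply mu_union_le; auto using bounded_In].
  apply mu_mono; [apply bounded_union; auto using bounded_In|].
  intros x Ax. destruct (classic (In x l)); tauto.
Qed.

(* Cutting at each point of [Z] in turn reduces to [mu_union_separated]. *)
Lemma mu_union_separated_by : forall Z A B, bounded A -> bounded B ->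
  (forall x, A x -> ~ In x Z) -> (forall x, B x -> ~ In x Z) ->
  (forall x y, A x -> B y -> exists z, In z Z /\ ((x < z < y) \/ (y < z < x))) ->
  mu A + mu B <= mu (fun x => A x \/ B x).
Proof.
  induction Z as [|z Z IH]; intros A B HA HB HAZ HBZ Hsep.
  - destruct (classic (exists x, A x)) as [[x Ax]|HnA].
    + destruct (classic (exists y, B y)) as [[y By]|HnB].
      * destruct (Hsep x y Ax By) as [z [[] _]].
      * rewrite (mu_empty B) by (intros y By; apply HnB; eauto).
        rewrite Rplus_0_r. apply mu_mono; [apply bounded_union|]; auto.
    + rewrite (mu_empty A) by (intros y Ay; apply HnA; eauto).
      rewrite Rplus_0_l. apply mu_mono; [apply bounded_union|]; auto.
  - assert (Hside : forall S : R -> Prop,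
      (forall x y, S x -> S y -> ~ (x < z < y \/ y < z < x)) ->
      mu (fun x => A x /\ S x) + mu (fun x => B x /\ S x)
        <= mu (fun x => (A x /\ S x) \/ (B x /\ S x))).
    { intros S HS. apply IH.
      - apply (bounded_sub _ A); tauto.
      - apply (bounded_sub _ B); tauto.
      - intros x [Ax _] Hx. apply (HAZ x Ax). simpl; auto.
      - intros x [Bx _] Hx. apply (HBZ x Bx). simpl; auto.
      - intros x y [Ax Sx] [By Sy].
        destruct (Hsep x y Ax By) as [z' [[<-|Hz'] Hb]]; [|eauto].
        destruct (HS x y Sx Sy Hb). }
    assert (HAz : ~ A z) by (intro Az; apply (HAZ z Az); simpl; auto).
    assert (HBz : ~ B z) by (intro Bz; apply (HBZ z Bz); simpl; auto).
    pose proof (mu_le_split_at A z HA HAz). pose proof (mu_le_split_at B z HB HBz).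
    pose proof (Hside (fun x => x < z) ltac:(intros; lra)).
    pose proof (Hside (fun x => z < x) ltac:(intros; lra)).
    assert (mu (fun x => (A x /\ x < z) \/ (B x /\ x < z))
            + mu (fun x => (A x /\ z < x) \/ (B x /\ z < x)) <= mu (fun x => A x \/ B x)).
    { eapply Rle_trans; [apply (mu_union_separated _ _ z)|].
      - apply (bounded_sub _ (fun x => A x \/ B x)); [apply bounded_union; auto|tauto].
      - apply (bounded_sub _ (fun x => A x \/ B x)); [apply bounded_union; auto|tauto].
      - intros x [[_ Hx]|[_ Hx]]; auto.
      - intros x [[_ Hx]|[_ Hx]]; auto.
      - apply mu_mono; [apply bounded_union; auto|]. tauto. }
    lra.
Qed.

Lemma mu_neighbourhood_le : forall Z d lo hi, 0 < d ->
  mu (fun t => lo <= t <= hi /\ exists z, In z Z /\ Rabs (t - z) < d) <= 2 * d * INR (length Z).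
Proof.
  induction Z as [|z Z IH]; intros d lo hi Hd.
  - rewrite mu_empty; [simpl; lra|]. intros x [_ [z [[] _]]].
  - apply Rle_trans with (mu (fun t => (z - d <= t <= z + d) \/
                           (lo <= t <= hi /\ exists z', In z' Z /\ Rabs (t - z') < d))).
    + apply mu_mono.
      * apply bounded_union; [apply bounded_interval|apply bounded_in_interval].
      * intros t [Ht [z' [[<-|Hz'] Hd']]].
        -- left. apply Rabs_def2 in Hd'. lra.
        -- right. split; eauto.
    + eapply Rle_trans;
        [apply mu_union_le; [apply bounded_interval|apply bounded_in_interval]|].
      assert (mu (fun t => z - d <= t <= z + d) <= (z + d) - (z - d))
        by (apply mu_le_interval; auto; lra).
      specialize (IH d lo hi Hd). simpl length. rewrite S_INR. lra.
Qed.

(** * Continuity and compactness on the line *)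

Lemma continuity_cst : forall c, continuity (fun _ => c).
Proof. intros c; apply continuity_const; intros ? ?; reflexivity. Qed.

Lemma continuity_sq : forall g, continuity g -> continuity (fun t => g t ^ 2).
Proof.
  intros g Hg. apply (continuity_comp g (fun y => y ^ 2)); auto.
  apply derivable_continuous, (derivable_pow 2).
Qed.

Lemma continuity_lipschitz : forall g : R -> R,
  (forall x y, Rabs (g x - g y) <= Rabs (x - y)) -> continuity g.
Proof.
  intros g Hg x eps Heps. exists eps. split; auto. intros y [_ Hy]. simpl in *.
  unfold R_dist in *. eapply Rle_lt_trans; [apply Hg|]; auto.
Qed.

Lemma continuity_cdist_cexp : forall th, continuity (fun t => cdist (cexp_i t) (cexp_i th)).
Proof.
  intros th t. unfold cdist, cexp_i; simpl.
  apply (continuity_pt_comp (fun t => (cos t - cos th) ^ 2 + (sin t - sin th) ^ 2) sqrt).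
  - apply continuity_plus; apply continuity_sq; apply continuity_minus;
      auto using continuity_cst, continuity_cos, continuity_sin.
  - apply continuity_pt_sqrt. apply Rplus_le_le_0_compat; apply pow2_ge_0.
Qed.

Lemma closed_set_ext : forall D1 D2, closed_set D1 -> (forall x, D1 x <-> D2 x) -> closed_set D2.
Proof.
  intros D1 D2 H E. unfold closed_set in *. apply (open_set_P6 _ _ H).
  split; intros x Hx; unfold complementary in *; intro; apply Hx, E; auto.
Qed.

Lemma closed_set_superlevel : forall g c, continuity g -> closed_set (fun t => c <= g t).
Proof.
  intros g c Hg. unfold closed_set. apply (open_set_P6 (image_rec g (fun y => y < c))).
  - apply continuity_P2; auto.
    intros x Hx. assert (Hd : 0 < c - x) by lra. exists (mkposreal _ Hd).
    intros y Hy. unfold disc in Hy; simpl in Hy. apply Rabs_def2 in Hy. lra.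
  - split; intros x Hx; unfold image_rec, complementary in *; lra.
Qed.

Lemma closed_set_inter : forall D1 D2, closed_set D1 -> closed_set D2 ->
  closed_set (fun x => D1 x /\ D2 x).
Proof.
  intros D1 D2 H1 H2. unfold closed_set in *.
  apply (open_set_P6 (union_domain (complementary D1) (complementary D2))).
  - apply open_set_P2; auto.
  - split; intros x Hx; unfold union_domain, complementary in *; tauto.
Qed.

Lemma closed_set_full : closed_set (fun _ => True).
Proof.
  unfold closed_set. apply (open_set_P6 (fun _ => False)); [apply open_set_P4|].
  split; intros x Hx; unfold complementary in *; tauto.
Qed.

Lemma closed_set_far : forall Z d, closed_set (fun t => forall z, In z Z -> d <= Rabs (t - z)).
Proof.
  induction Z as [|z Z IH]; intros d.
  - apply (closed_set_ext _ _ closed_set_full). intros x; split; auto. intros _ z [].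
  - apply (closed_set_ext (fun t => d <= Rabs (t - z) /\
                             (forall z', In z' Z -> d <= Rabs (t - z')))).
    + apply closed_set_inter; auto. apply closed_set_superlevel.
      apply (continuity_comp (fun t => t - z) Rabs); [|apply Rcontinuity_abs].
      apply continuity_minus; [apply derivable_continuous, derivable_id|apply continuity_cst].
    + intros x; split.
      * intros [H1 H2] z' [<-|Hz']; auto.
      * intros H; split; [apply H; simpl; auto|]. intros; apply H; simpl; auto.
Qed.

Lemma closed_set_interval : forall a b, closed_set (fun t => a <= t <= b).
Proof.
  intros a b. apply (closed_set_ext (fun t => a <= id t /\ -b <= - id t)).
  - apply closed_set_inter; apply closed_set_superlevel.
    + apply derivable_continuous, derivable_id.
    + apply continuity_opp. apply derivable_continuous, derivable_id.
  - intros x; unfold id; split; intros; lra.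
Qed.

Lemma closed_set_le : forall s, closed_set (fun t => t <= s).
Proof.
  intros s. apply (closed_set_ext (fun t => -s <= - id t)).
  - apply closed_set_superlevel. apply continuity_opp. apply derivable_continuous, derivable_id.
  - intros x; unfold id; split; intros; lra.
Qed.

Lemma compact_argmax : forall K g, compact K -> (exists x, K x) -> continuity g ->
  exists x0, K x0 /\ forall x, K x -> g x <= g x0.
Proof.
  intros K g HK [x Kx] Hg.
  assert (HY : compact (image_dir g K)) by (apply continuity_compact; auto).
  destruct (compact_P1 _ HY) as [lo [hi Hb]].
  assert (Hub : bound (image_dir g K)) by (exists hi; intros y Hy; apply Hb; auto).
  assert (Hne : exists y, image_dir g K y) by (exists (g x); exists x; auto).
  destruct (completeness _ Hub Hne) as [M [HM1 HM2]].
  assert (HMin : image_dir g K M).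
  { apply (proj1 (closed_set_P1 _) (compact_P2 _ HY)).
    intros V [d Hd]. apply NNPP; intro Hn.
    assert (is_upper_bound (image_dir g K) (M - d)).
    { intros y Hy. apply Rnot_lt_le. intro Hlt. apply Hn. exists y. split; auto.
      apply Hd. unfold disc. specialize (HM1 y Hy). rewrite Rabs_left1; lra. }
    specialize (HM2 _ H). destruct d; simpl in *; lra. }
  destruct HMin as [x0 [E Kx0]]. exists x0. split; auto.
  intros y Ky. rewrite <- E. apply HM1. exists y; auto.
Qed.

Lemma compact_argmin : forall K g, compact K -> (exists x, K x) -> continuity g ->
  exists x0, K x0 /\ forall x, K x -> g x0 <= g x.
Proof.
  intros K g HK Hne Hg.
  destruct (compact_argmax K (fun x => - g x) HK Hne) as [x0 [Kx0 H]].
  - apply continuity_opp in Hg. exact Hg.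
  - exists x0; split; auto. intros x Kx; specialize (H x Kx); lra.
Qed.

Lemma compact_in_period : forall K, closed_set K -> (forall t, K t -> 0 <= t <= 2 * PI) ->
  compact K.
Proof. intros K HK Hb. apply compact_P5; auto. exists 0, (2 * PI). auto. Qed.

(** * Continuous functions with a finite level set *)

Section FiniteLevel.

Variable f : R -> R.
Hypothesis f_cont : continuity f.
Variable h : R.
Variable Z : list R.
Hypothesis level_in_Z : forall t, 0 <= t <= 2 * PI -> f t = h -> In t Z.

Lemma level_far_gap : forall d, 0 < d -> exists eta, 0 < eta /\
  forall t, 0 <= t <= 2 * PI -> (forall z, In z Z -> d <= Rabs (t - z)) -> eta <= Rabs (f t - h).
Proof.
  intros d Hd.
  set (K := fun t => (0 <= t <= 2 * PI) /\ (forall z, In z Z -> d <= Rabs (t - z))).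
  destruct (classic (exists t, K t)) as [Hne|Hem].
  - assert (HK : compact K).
    { apply compact_in_period; [|intros x [Hx _]; auto].
      apply closed_set_inter; [apply closed_set_interval|apply closed_set_far]. }
    assert (Hg : continuity (fun t => Rabs (f t - h))).
    { apply (continuity_comp (fun t => f t - h) Rabs); [|apply Rcontinuity_abs].
      apply continuity_minus; auto using continuity_cst. }
    destruct (compact_argmin K _ HK Hne Hg) as [t0 [[Ht0 Hf0] Hmin]].
    exists (Rabs (f t0 - h)). split.
    + apply Rabs_pos_lt. intro E. assert (Hz : In t0 Z) by (apply level_in_Z; auto; lra).
      specialize (Hf0 t0 Hz). rewrite Rminus_diag, Rabs_R0 in Hf0. lra.
    + intros t Ht Hfar. apply (Hmin t). split; auto.
  - exists 1. split; [lra|]. intros t Ht Hfar. exfalso. apply Hem. exists t. split; auto.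
Qed.

Lemma mu_near_level_le : forall d, 0 < d -> exists eta, 0 < eta /\
  mu (fun t => 0 <= t <= 2 * PI /\ Rabs (f t - h) < eta) <= 2 * d * INR (length Z).
Proof.
  intros d Hd. destruct (level_far_gap d Hd) as [eta [Heta Hfar]].
  exists eta. split; auto.
  eapply Rle_trans; [|apply (mu_neighbourhood_le Z d 0 (2 * PI) Hd)].
  apply mu_mono; [apply bounded_in_interval|].
  intros t [Ht Hft]. split; auto. apply NNPP. intro Hn.
  assert (eta <= Rabs (f t - h)); [|lra].
  apply Hfar; auto. intros z Hz. apply Rnot_lt_le. intro Hlt. apply Hn. eauto.
Qed.

Lemma mu_sublevel_inner_gap : forall a, a < mu (fun t => 0 <= t < 2 * PI /\ f t < h) ->
  exists eta, 0 < eta /\ a < mu (fun t => 0 <= t < 2 * PI /\ f t <= h - eta).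
Proof.
  intros a Ha. set (g := mu (fun t => 0 <= t < 2 * PI /\ f t < h)) in *.
  assert (HL : 0 < INR (length Z) + 1) by (pose proof (pos_INR (length Z)); lra).
  set (d := (g - a) / (4 * (INR (length Z) + 1))).
  assert (Hd : 0 < d) by (unfold d; apply Rdiv_lt_0_compat; lra).
  destruct (mu_near_level_le d Hd) as [eta [Heta Hmu]].
  exists (eta / 2). split; [lra|].
  assert (g <= mu (fun t => 0 <= t < 2 * PI /\ f t <= h - eta / 2)
             + mu (fun t => 0 <= t <= 2 * PI /\ Rabs (f t - h) < eta)).
  { eapply Rle_trans; [|apply mu_union_le; [apply bounded_in_period|apply bounded_in_interval]].
    apply mu_mono; [apply bounded_union; [apply bounded_in_period|apply bounded_in_interval]|].
    intros t [Ht Hf]. destruct (Rle_dec (f t) (h - eta / 2)); [left; auto|right].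
    split; [lra|]. rewrite Rabs_left; lra. }
  assert (2 * d * INR (length Z) < g - a); [|lra].
  unfold d. apply Rmult_lt_reg_r with (4 * (INR (length Z) + 1)); [lra|].
  field_simplify; [|lra]. pose proof (pos_INR (length Z)). nra.
Qed.

Lemma mu_sublevel_of_approx : forall a,
  (forall eta, 0 < eta -> a <= mu (fun t => 0 <= t < 2 * PI /\ f t <= h + eta)) ->
  a <= mu (fun t => 0 <= t < 2 * PI /\ f t < h).
Proof.
  intros a Ha. apply Rnot_lt_le. intro Hlt.
  set (g := mu (fun t => 0 <= t < 2 * PI /\ f t < h)) in *.
  assert (HL : 0 < INR (length Z) + 1) by (pose proof (pos_INR (length Z)); lra).
  set (d := (a - g) / (4 * (INR (length Z) + 1))).
  assert (Hd : 0 < d) by (unfold d; apply Rdiv_lt_0_compat; lra).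
  destruct (mu_near_level_le d Hd) as [eta [Heta Hmu]].
  specialize (Ha (eta / 2) ltac:(lra)).
  assert (mu (fun t => 0 <= t < 2 * PI /\ f t <= h + eta / 2) <=
          g + mu (fun t => 0 <= t <= 2 * PI /\ Rabs (f t - h) < eta)).
  { eapply Rle_trans; [|apply mu_union_le; [apply bounded_in_period|apply bounded_in_interval]].
    apply mu_mono; [apply bounded_union; [apply bounded_in_period|apply bounded_in_interval]|].
    intros t [Ht Hf]. destruct (Rlt_dec (f t) h); [left; auto|right].
    split; [lra|]. rewrite Rabs_right; lra. }
  assert (2 * d * INR (length Z) < a - g); [|lra].
  unfold d. apply Rmult_lt_reg_r with (4 * (INR (length Z) + 1)); [lra|].
  field_simplify; [|lra]. pose proof (pos_INR (length Z)). nra.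
Qed.

Lemma level_between : forall x y, 0 <= x <= 2 * PI -> 0 <= y <= 2 * PI ->
  f x < h -> h < f y -> exists z, In z Z /\ (x < z < y \/ y < z < x).
Proof.
  intros x y Hx Hy Hfx Hfy.
  assert (Hc : forall c, continuity (fun t => c * (f t - h))).
  { intro c. apply continuity_scal, continuity_minus; auto using continuity_cst. }
  destruct (Rtotal_order x y) as [Hxy|[<-|Hxy]]; [|lra|].
  - destruct (IVT (fun t => 1 * (f t - h)) x y (Hc 1) Hxy) as [z [Hz Hfz]]; try lra.
    exists z. split; [apply level_in_Z; lra|].
    left. split; apply Rnot_le_lt; intro; assert (z = x \/ z = y) as [->| ->] by lra; lra.
  - destruct (IVT (fun t => -1 * (f t - h)) y x (Hc (-1)) Hxy) as [z [Hz Hfz]]; try lra.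
    exists z. split; [apply level_in_Z; lra|].
    right. split; apply Rnot_le_lt; intro; assert (z = x \/ z = y) as [->| ->] by lra; lra.
Qed.

(* Off the finite set [Z], the sets [{f < h}] and [{f > h}] are separated by points of [Z]. *)
Lemma mu_sublevel_add_superlevel :
  mu (fun t => 0 <= t < 2 * PI /\ f t < h) + mu (fun t => 0 <= t < 2 * PI /\ f t >= h)
  <= 2 * PI.
Proof.
  set (A := fun t => (0 <= t < 2 * PI /\ f t < h) /\ ~ In t Z).
  set (B := fun t => (0 <= t < 2 * PI /\ f t > h) /\ ~ In t Z).
  assert (HA : mu (fun t => 0 <= t < 2 * PI /\ f t < h) <= mu A)
    by apply mu_le_remove_finite, bounded_in_period.
  assert (HB : mu (fun t => 0 <= t < 2 * PI /\ f t >= h) <= mu B).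
  { eapply Rle_trans; [apply (mu_le_remove_finite _ Z), bounded_in_period|].
    apply mu_mono.
    { apply (bounded_sub _ _ (bounded_in_period (fun t => f t > h))). intros t [Ht _]; exact Ht. }
    intros t [[Ht Hf] Hn]. split; [split; [exact Ht|]|exact Hn].
    destruct (Req_dec (f t) h) as [E|E]; [|lra].
    exfalso. apply Hn, level_in_Z; auto; lra. }
  assert (mu A + mu B <= mu (fun t => 0 <= t < 2 * PI)).
  { eapply Rle_trans; [apply (mu_union_separated_by Z)|].
    - apply (bounded_sub _ _ (bounded_in_period (fun t => f t < h))). intros t [Ht _]; exact Ht.
    - apply (bounded_sub _ _ (bounded_in_period (fun t => f t > h))). intros t [Ht _]; exact Ht.
    - intros x [_ Hn]; auto.
    - intros x [_ Hn]; auto.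
    - intros x y [[Hx Hfx] _] [[Hy Hfy] _]. apply level_between; auto; lra.
    - apply mu_mono; [exists 0, (2 * PI); intros; lra|]. intros x [[[Hx _] _]|[[Hx _] _]]; auto. }
  rewrite mu_period in *. lra.
Qed.

Lemma mu_superlevel_le : forall a,
  (forall eta, 0 < eta -> a <= mu (fun t => 0 <= t < 2 * PI /\ f t <= h + eta)) ->
  mu (fun t => 0 <= t < 2 * PI /\ f t >= h) <= 2 * PI - a.
Proof.
  intros a Ha. pose proof (mu_sublevel_of_approx a Ha). pose proof mu_sublevel_add_superlevel.
  lra.
Qed.

(* Inner regularity of the sublevel set: drop a thin neighbourhood of the level set and a short
   final arc, which leaves a closed subset of [[0, 2 pi)]. *)
Lemma closed_sublevel_inner : forall a, a < mu (fun t => 0 <= t < 2 * PI /\ f t < h) ->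
  exists K, closed_set K /\ (forall t, K t -> 0 <= t < 2 * PI) /\
            (forall t, K t -> f t < h) /\ a < mu K.
Proof.
  intros a Ha. pose proof PI_RGT_0.
  destruct (mu_sublevel_inner_gap ((a + mu (fun t => 0 <= t < 2 * PI /\ f t < h)) / 2))
    as [eta [Heta Hmu]]; [lra|].
  set (g := mu (fun t => 0 <= t < 2 * PI /\ f t < h)) in *.
  set (e := Rmin ((g - a) / 4) PI).
  assert (He : 0 < e) by (unfold e; apply Rmin_glb_lt; lra).
  assert (He1 : e <= (g - a) / 4) by apply Rmin_l.
  assert (He2 : e <= PI) by apply Rmin_r.
  exists (fun t => (0 <= t <= 2 * PI - e) /\ (eta - h) <= - f t).
  split; [|split; [|split]].
  - apply closed_set_inter; [apply closed_set_interval|].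
    apply closed_set_superlevel, continuity_opp; auto.
  - intros t [Ht _]; lra.
  - intros t [_ Ht]; lra.
  - assert (mu (fun t => 0 <= t < 2 * PI /\ f t <= h - eta) <=
        mu (fun t => (0 <= t <= 2 * PI - e) /\ (eta - h) <= - f t)
        + mu (fun t => 2 * PI - e <= t <= 2 * PI)).
    { eapply Rle_trans; [|apply mu_union_le; [apply bounded_in_interval|apply bounded_interval]].
      apply mu_mono; [apply bounded_union; [apply bounded_in_interval|apply bounded_interval]|].
      intros t [Ht Hft]. destruct (Rle_dec t (2 * PI - e)); [left; split; lra|right; lra]. }
    assert (mu (fun t => 2 * PI - e <= t <= 2 * PI) <= 2 * PI - (2 * PI - e))
      by (apply mu_le_interval; auto; lra).
    lra.
Qed.

End FiniteLevel.

(* [s |-> mu (K /\ (-oo, s])] is nondecreasing and 1-Lipschitz, so it takes every value in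
   [[0, mu K]]. *)
Lemma mu_truncation_exact : forall K a, (forall t, K t -> 0 <= t <= 2 * PI) ->
  0 < a -> a < mu K -> exists s, mu (fun t => K t /\ t <= s) = a.
Proof.
  intros K a Hb Ha HaK.
  assert (HBK : bounded K) by (exists 0, (2 * PI); auto).
  assert (HBs : forall s, bounded (fun t => K t /\ t <= s))
    by (intros s; apply (bounded_sub _ K); tauto).
  set (phi := fun s => mu (fun t => K t /\ t <= s)).
  assert (Hmono : forall x y, x <= y -> phi x <= phi y).
  { intros x y Hxy. apply mu_mono; auto. intros t [Kt Ht]; split; auto; lra. }
  assert (Hlip : forall x y, x <= y -> phi y <= phi x + (y - x)).
  { intros x y Hxy. unfold phi.
    eapply Rle_trans; [|apply Rplus_le_compat_l;
                        apply (mu_le_interval (fun t => x <= t <= y)); [lra|auto]].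
    eapply Rle_trans; [|apply mu_union_le; auto using bounded_interval].
    apply mu_mono; [apply bounded_union; auto using bounded_interval|].
    intros t [Kt Ht]. destruct (Rle_dec t x); [left; auto|right; lra]. }
  assert (Hc : continuity (fun s => phi s - a)).
  { apply continuity_minus; [|apply continuity_cst].
    apply continuity_lipschitz. intros x y. destruct (Rle_dec x y) as [Hxy|Hxy].
    - specialize (Hmono x y Hxy). specialize (Hlip x y Hxy).
      rewrite Rabs_left1 by lra. rewrite Rabs_left1 by lra. lra.
    - assert (Hyx : y <= x) by lra. specialize (Hmono y x Hyx). specialize (Hlip y x Hyx).
      rewrite Rabs_right by lra. rewrite Rabs_right by lra. lra. }
  assert (H0 : phi 0 <= 0).
  { assert (phi 0 <= 0 - 0); [|lra].
    apply mu_le_interval; [lra|]. intros t [Kt Ht]. specialize (Hb t Kt). lra. }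
  assert (H2 : phi (2 * PI) = mu K).
  { apply mu_ext; auto. intros t; split; [tauto|]. intros Kt; split; auto. apply Hb; auto. }
  pose proof PI_RGT_0.
  destruct (IVT (fun s => phi s - a) 0 (2 * PI) Hc) as [s [_ Hs]]; try lra.
  exists s. unfold phi in Hs. lra.
Qed.

(** * The modulus of a polynomial along the circle *)

Definition Pcirc (ths : list R) (t : R) : R := Pabs ths (cexp_i t).

Lemma continuity_Pcirc : forall ths, continuity (Pcirc ths).
Proof.
  induction ths as [|th ths IH]; unfold Pcirc; simpl.
  - apply continuity_cst.
  - apply continuity_mult; [apply continuity_cdist_cexp|apply IH].
Qed.

Lemma Pcirc_le_pow : forall ths t, Pcirc ths t <= 2 ^ length ths.
Proof.
  induction ths as [|th ths IH]; intros t; unfold Pcirc in *; simpl; [lra|].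
  apply Rmult_le_compat; auto using cdist_nonneg, Pabs_nonneg, cdist_cexp_le_2.
Qed.

Lemma Pcirc_ge_pow : forall ths t s, 0 <= s ->
  (forall th, In th ths -> s <= cdist (cexp_i t) (cexp_i th)) -> s ^ length ths <= Pcirc ths t.
Proof.
  induction ths as [|th ths IH]; intros t s Hs H; unfold Pcirc; simpl; [lra|].
  apply Rmult_le_compat; auto using pow_le.
  - apply H; simpl; auto.
  - apply IH; auto. intros; apply H; simpl; auto.
Qed.

(* Keep adding new elements of [P] to a duplicate-free list; the bound [N] stops this. *)
Lemma finite_of_NoDup_bounded : forall {A : Type} (P : A -> Prop) N,
  (forall l, NoDup l -> (forall x, In x l -> P x) -> (length l <= N)%nat) ->
  exists l, forall x, P x -> In x l.
Proof.
  intros A P N HN.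
  assert (H : forall k l, NoDup l -> (forall x, In x l -> P x) -> (N - length l <= k)%nat ->
                exists l', forall x, P x -> In x l').
  { induction k as [|k IH]; intros l Hnd Hl Hk;
      (destruct (classic (forall x, P x -> In x l)) as [Hall|Hn]; [exists l; auto|]);
      apply not_all_ex_not in Hn; destruct Hn as [x Hx];
      apply imply_to_and in Hx; destruct Hx as [Px Hnin];
      (assert (Hx : (length (x :: l) <= N)%nat);
         [apply HN; [constructor; auto|intros y [<-|Hy]; auto]|]).
    - simpl in Hx. lia.
    - apply (IH (x :: l)); [constructor; auto|intros y [<-|Hy]; auto|simpl in *; lia]. }
  apply (H N []); simpl; auto. constructor. intros x []. lia.
Qed.

Lemma Pcirc_level_finite : forall ths h, (1 <= length ths)%nat ->
  exists Z, forall t, 0 <= t <= 2 * PI -> Pcirc ths t = h -> In t Z.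
Proof.
  intros ths h Hl.
  destruct (finite_of_NoDup_bounded (fun t => 0 <= t < 2 * PI /\ Pcirc ths t = h)
              (length ths + length ths)) as [l Hlist].
  - intros l Hnd Hall. apply (level_set_card_le ths h l Hl Hnd). intros t Ht; apply Hall; auto.
  - exists (l ++ [2 * PI]). intros t Ht Hf. apply in_app_iff.
    destruct (Rlt_dec t (2 * PI)); [left; apply Hlist; split; auto; lra|right; left; lra].
Qed.

Definition arc_set (K : R -> Prop) : pt -> Prop := fun z => exists t, K t /\ z = cexp_i t.

Lemma compact_in_circle_arc_set : forall K, closed_set K ->
  (forall t, K t -> 0 <= t < 2 * PI) -> compact_in_circle (arc_set K).
Proof.
  intros K HK Hb. split; [intros z [t [_ ->]]; apply on_circle_cexp|].
  intros p Hp. destruct (classic (exists t, K t)) as [Hne|Hem].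
  - assert (HKc : compact K) by (apply compact_in_period; auto; intros t Kt; specialize (Hb t Kt); lra).
    set (g := fun t => (cos t - fst p) ^ 2 + (sin t - snd p) ^ 2).
    assert (Hg : continuity g).
    { unfold g. apply continuity_plus; apply continuity_sq; apply continuity_minus;
        auto using continuity_cst, continuity_cos, continuity_sin. }
    destruct (compact_argmin K g HKc Hne Hg) as [t0 [Kt0 Hmin]].
    assert (Hpos : 0 < g t0).
    { destruct (Rlt_dec 0 (g t0)) as [H|H]; auto.
      exfalso. apply Hp. exists t0. split; auto. unfold g in H.
      pose proof (pow2_ge_0 (cos t0 - fst p)). pose proof (pow2_ge_0 (sin t0 - snd p)).
      assert (E1 : cos t0 - fst p = 0) by nra.
      assert (E2 : sin t0 - snd p = 0) by nra.
      destruct p as [p1 p2]. unfold cexp_i. simpl in *. f_equal; lra. }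
    exists (sqrt (g t0)). split; [apply sqrt_lt_R0; auto|].
    intros q Hq [t [Kt ->]]. rewrite pow2_sqrt in Hq by lra.
    specialize (Hmin t Kt). unfold g, cexp_i in *. simpl in Hq.
    assert ((cos t - fst p) ^ 2 + (sin t - snd p) ^ 2
            = (fst p - cos t) ^ 2 + (snd p - sin t) ^ 2) by ring.
    lra.
  - exists 1. split; [lra|]. intros q _ [t [Kt _]]. apply Hem; eauto.
Qed.

Lemma arc_measure_arc_set : forall K, (forall t, K t -> 0 <= t < 2 * PI) ->
  arc_measure (arc_set K) (mu K).
Proof.
  intros K Hb. unfold arc_measure.
  replace (mu K) with (mu (fun t => 0 <= t < 2 * PI /\ arc_set K (cexp_i t)));
    [apply mu_spec, bounded_in_period|].
  apply mu_ext; [exists 0, (2 * PI); intros x Kx; specialize (Hb x Kx); lra|].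
  intros t; split.
  - intros [Ht [s [Ks E]]]. replace t with s; auto. apply cexp_inj; auto.
  - intros Kt; split; [auto|]. exists t; auto.
Qed.

Lemma E_Q_arc_set : forall m K ths, closed_set K -> (forall t, K t -> 0 <= t < 2 * PI) ->
  (exists t, K t) -> length ths = m ->
  exists e, E_Q m (arc_set K) e /\ exists t0, K t0 /\ e <= Pcirc ths t0.
Proof.
  intros m K ths HK Hb Hne Hl.
  assert (HKc : compact K) by (apply compact_in_period; auto; intros t Kt; specialize (Hb t Kt); lra).
  destruct (compact_argmax K (Pcirc ths) HKc Hne (continuity_Pcirc ths)) as [t0 [Kt0 Hmax]].
  assert (Hmax' : is_max (fun x => exists z, arc_set K z /\ x = Pabs ths z) (Pcirc ths t0)).
  { split; [exists (cexp_i t0); split; [exists t0; auto|reflexivity]|].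
    intros x [z [[t [Kt ->]] ->]]. apply (Hmax t Kt). }
  destruct (glb_exists (fun v => exists ths, in_Pm m ths /\
              is_max (fun x => exists z, arc_set K z /\ x = Pabs ths z) v)) as [e He].
  - exists (Pcirc ths t0), ths. split; auto.
  - exists 0. intros v [ths' [_ [[z [_ ->]] _]]]. apply Pabs_nonneg.
  - exists e. split; [exact He|]. exists t0. split; auto.
    destruct He as [He _]. apply He. exists ths. split; auto.
Qed.

(** * Small sublevel sets *)

Lemma cos_period_Z : forall x (j : Z), cos (x + 2 * PI * IZR j) = cos x.
Proof.
  intros x j. destruct (Z.le_gt_cases 0 j) as [Hj|Hj].
  - destruct (Z_of_nat_complete _ Hj) as [n ->]. rewrite <- INR_IZR_INZ.
    replace (2 * PI * INR n) with (2 * INR n * PI) by ring. apply cos_period.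
  - assert (Hj' : (0 <= - j)%Z) by lia. destruct (Z_of_nat_complete _ Hj') as [n En].
    replace j with (- Z.of_nat n)%Z by lia. rewrite opp_IZR, <- INR_IZR_INZ.
    rewrite <- (cos_period (x + 2 * PI * - INR n) n). f_equal. ring.
Qed.

Lemma sin_period_Z : forall x (j : Z), sin (x + 2 * PI * IZR j) = sin x.
Proof.
  intros x j. destruct (Z.le_gt_cases 0 j) as [Hj|Hj].
  - destruct (Z_of_nat_complete _ Hj) as [n ->]. rewrite <- INR_IZR_INZ.
    replace (2 * PI * INR n) with (2 * INR n * PI) by ring. apply sin_period.
  - assert (Hj' : (0 <= - j)%Z) by lia. destruct (Z_of_nat_complete _ Hj') as [n En].
    replace j with (- Z.of_nat n)%Z by lia. rewrite opp_IZR, <- INR_IZR_INZ.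
    rewrite <- (sin_period (x + 2 * PI * - INR n) n). f_equal. ring.
Qed.

Definition angle_mod (x : R) : R := x - 2 * PI * IZR (up (x / (2 * PI)) - 1).

Lemma angle_mod_range : forall x, 0 <= angle_mod x < 2 * PI.
Proof.
  intros x. unfold angle_mod. pose proof PI_RGT_0. rewrite minus_IZR.
  pose proof (archimed (x / (2 * PI))) as [H1 H2]. simpl.
  set (u := IZR (up (x / (2 * PI)))) in *.
  assert (E : x = (x / (2 * PI)) * (2 * PI)) by (field; lra).
  split.
  - assert (H3 : x / (2 * PI) >= u - 1) by lra.
    apply Rmult_ge_compat_r with (r := 2 * PI) in H3; [|lra]. lra.
  - apply Rmult_lt_compat_r with (r := 2 * PI) in H1; [|lra]. lra.
Qed.

Lemma cexp_angle_mod : forall x, cexp_i (angle_mod x) = cexp_i x.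
Proof.
  intros x. unfold angle_mod, cexp_i.
  replace (x - 2 * PI * IZR (up (x / (2 * PI)) - 1))
    with (x + 2 * PI * IZR (- (up (x / (2 * PI)) - 1))) by (rewrite opp_IZR; ring).
  rewrite cos_period_Z, sin_period_Z. reflexivity.
Qed.

Lemma cos_gt_near_2PI_mult : forall x d, 0 < d < PI -> cos d < cos x ->
  exists j : Z, Rabs (x - 2 * PI * IZR j) < d.
Proof.
  intros x d Hd Hc. pose proof PI_RGT_0.
  pose proof (angle_mod_range (x + PI)) as Hy. unfold angle_mod in Hy.
  set (j := (up ((x + PI) / (2 * PI)) - 1)%Z) in Hy.
  exists j. set (y := x - 2 * PI * IZR j).
  assert (Hy' : - PI <= y < PI) by (unfold y; lra).
  assert (Hcy : cos y = cos x).
  { unfold y. rewrite <- (cos_period_Z (x - 2 * PI * IZR j) j). f_equal. ring. }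
  destruct (Rle_dec 0 y) as [H0|H0].
  - rewrite Rabs_right by lra. apply Rnot_le_lt. intro Hle.
    destruct (Rle_lt_or_eq_dec _ _ Hle) as [Hlt|Heq]; [|subst; lra].
    pose proof (cos_decreasing_1 d y ltac:(lra) ltac:(lra) ltac:(lra) ltac:(lra) Hlt). lra.
  - rewrite Rabs_left by lra. apply Rnot_le_lt. intro Hle.
    rewrite <- cos_neg in Hcy.
    destruct (Rle_lt_or_eq_dec _ _ Hle) as [Hlt|Heq]; [|rewrite <- Heq in Hcy; lra].
    pose proof (cos_decreasing_1 d (- y) ltac:(lra) ltac:(lra) ltac:(lra) ltac:(lra) Hlt). lra.
Qed.

(* Reducing [th] into [[0, 2 pi)], only the shifts [j - 1], [j] and [j + 1] can meet
   [[0, 2 pi]]. *)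
Lemma mu_near_angle_le : forall th d, 0 < d < PI ->
  mu (fun t => 0 <= t <= 2 * PI /\ exists j : Z, Rabs (t - th - 2 * PI * IZR j) < d) <= 6 * d.
Proof.
  intros th d Hd. pose proof PI_RGT_0.
  pose proof (angle_mod_range th) as Hth. unfold angle_mod in Hth.
  set (j0 := (up (th / (2 * PI)) - 1)%Z) in Hth.
  set (th' := th - 2 * PI * IZR j0) in Hth.
  set (I := fun c t => c - d <= t <= c + d).
  apply Rle_trans with (mu (fun t => I (th' - 2 * PI) t \/ (I th' t \/ I (th' + 2 * PI) t))).
  - apply mu_mono; [apply bounded_union; [|apply bounded_union]; apply bounded_interval|].
    intros t [Ht [j Hj]]. set (k := (j + j0)%Z).
    assert (Hk : Rabs (t - th' - 2 * PI * IZR k) < d).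
    { unfold k, th'. rewrite plus_IZR.
      replace (t - (th - 2 * PI * IZR j0) - 2 * PI * (IZR j + IZR j0))
        with (t - th - 2 * PI * IZR j) by ring. auto. }
    apply Rabs_def2 in Hk.
    assert (Hk1 : IZR k < 2) by (apply Rmult_lt_reg_l with (2 * PI); lra).
    assert (Hk2 : -2 < IZR k) by (apply Rmult_lt_reg_l with (2 * PI); lra).
    apply lt_IZR in Hk1. apply lt_IZR in Hk2.
    assert (Hk3 : (k = -1 \/ k = 0 \/ k = 1)%Z) by lia. unfold I.
    destruct Hk3 as [E|[E|E]]; rewrite E in Hk; simpl in Hk; lra.
  - eapply Rle_trans; [apply mu_union_le; [|apply bounded_union]; apply bounded_interval|].
    eapply Rle_trans; [apply Rplus_le_compat_l, mu_union_le; apply bounded_interval|].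
    assert (Hc : forall c, mu (I c) <= (c + d) - (c - d))
      by (intro c; apply mu_le_interval; unfold I; auto; lra).
    pose proof (Hc (th' - 2 * PI)). pose proof (Hc th'). pose proof (Hc (th' + 2 * PI)). lra.
Qed.

Lemma mu_near_angles_le : forall ths d, 0 < d < PI ->
  mu (fun t => 0 <= t <= 2 * PI /\
         exists th, In th ths /\ exists j : Z, Rabs (t - th - 2 * PI * IZR j) < d)
   <= 6 * d * INR (length ths).
Proof.
  induction ths as [|th ths IH]; intros d Hd.
  - rewrite mu_empty; [simpl; lra|]. intros t [_ [th [[] _]]].
  - eapply Rle_trans; [apply (mu_mono _
      (fun t => (0 <= t <= 2 * PI /\ exists j : Z, Rabs (t - th - 2 * PI * IZR j) < d) \/
         (0 <= t <= 2 * PI /\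
          exists th', In th' ths /\ exists j : Z, Rabs (t - th' - 2 * PI * IZR j) < d)))|].
    + apply bounded_union; apply bounded_in_interval.
    + intros t [Ht [th' [[<-|Hin] Hj]]]; [left|right]; eauto.
    + eapply Rle_trans; [apply mu_union_le; apply bounded_in_interval|].
      pose proof (mu_near_angle_le th d Hd). specialize (IH d Hd).
      simpl length. rewrite S_INR. lra.
Qed.

(* Where [|P(e^it)| < s^m] with [s = |1 - e^id|], some zero lies within angle [d] of [t]. *)
Lemma mu_sublevel_small : forall m, (1 <= m)%nat -> forall eps, 0 < eps -> exists r, 0 < r /\
  forall ths, length ths = m -> mu (fun t => 0 <= t < 2 * PI /\ Pcirc ths t < r) <= eps.
Proof.
  intros m Hm eps Heps. pose proof PI_RGT_0.
  assert (HmR : 0 < INR m) by (apply lt_0_INR; lia).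
  set (d := Rmin (PI / 2) (eps / (6 * INR m))).
  assert (Hd : 0 < d) by (unfold d; apply Rmin_glb_lt; [lra|apply Rdiv_lt_0_compat; lra]).
  assert (Hd1 : d <= PI / 2) by apply Rmin_l.
  assert (Hd2 : d <= eps / (6 * INR m)) by apply Rmin_r.
  assert (Hcd : cos d < 1) by (rewrite <- cos_0; apply cos_decreasing_1; lra).
  set (s := sqrt (2 - 2 * cos d)).
  assert (Hs : 0 < s) by (apply sqrt_lt_R0; lra).
  exists (s ^ m). split; [apply pow_lt; auto|].
  intros ths Hl.
  eapply Rle_trans; [apply (mu_mono _ (fun t => 0 <= t <= 2 * PI /\
     exists th, In th ths /\ exists j : Z, Rabs (t - th - 2 * PI * IZR j) < d))|].
  - apply bounded_in_interval.
  - intros t [Ht Hf]. split; [lra|]. apply NNPP. intro Hn.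
    assert (s ^ length ths <= Pcirc ths t); [|rewrite Hl in *; lra].
    apply Pcirc_ge_pow; [lra|]. intros th Hth. apply Rnot_lt_le. intro Hlt.
    apply Hn. exists th. split; auto.
    apply cos_gt_near_2PI_mult; [lra|].
    pose proof (cdist_cexp_sq t th). pose proof (cdist_nonneg (cexp_i t) (cexp_i th)).
    assert (Hs2 : s ^ 2 = 2 - 2 * cos d) by (unfold s; rewrite pow2_sqrt; lra).
    nra.
  - eapply Rle_trans; [apply mu_near_angles_le; lra|]. rewrite Hl.
    apply Rmult_le_reg_r with (/ (INR m)); [apply Rinv_0_lt_compat; auto|].
    rewrite Rmult_assoc, Rinv_r by lra. unfold Rdiv in Hd2.
    rewrite Rinv_mult in Hd2. lra.
Qed.

(** * Compactness of the space of zeros *)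

Lemma cdist_triangle : forall z u w, cdist z w <= cdist z u + cdist u w.
Proof.
  intros [z1 z2] [u1 u2] [w1 w2]. unfold cdist; cbn [fst snd].
  set (a1 := z1 - u1). set (a2 := z2 - u2). set (b1 := u1 - w1). set (b2 := u2 - w2).
  replace (z1 - w1) with (a1 + b1) by (unfold a1, b1; ring).
  replace (z2 - w2) with (a2 + b2) by (unfold a2, b2; ring).
  assert (HA : 0 <= a1 ^ 2 + a2 ^ 2) by nra. assert (HB : 0 <= b1 ^ 2 + b2 ^ 2) by nra.
  assert (Hcs : a1 * b1 + a2 * b2 <= sqrt (a1 ^ 2 + a2 ^ 2) * sqrt (b1 ^ 2 + b2 ^ 2)).
  { rewrite <- sqrt_mult by auto.
    destruct (Rle_dec (a1 * b1 + a2 * b2) 0) as [H|H];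
      [pose proof (sqrt_pos ((a1 ^ 2 + a2 ^ 2) * (b1 ^ 2 + b2 ^ 2))); lra|].
    rewrite <- (sqrt_pow2 (a1 * b1 + a2 * b2)) by lra. apply sqrt_le_1_alt.
    assert (0 <= (a1 * b2 - a2 * b1) ^ 2) by apply pow2_ge_0. nra. }
  pose proof (sqrt_pos (a1 ^ 2 + a2 ^ 2)). pose proof (sqrt_pos (b1 ^ 2 + b2 ^ 2)).
  rewrite <- (sqrt_pow2 (sqrt (a1 ^ 2 + a2 ^ 2) + sqrt (b1 ^ 2 + b2 ^ 2))) by lra.
  apply sqrt_le_1_alt.
  replace ((sqrt (a1 ^ 2 + a2 ^ 2) + sqrt (b1 ^ 2 + b2 ^ 2)) ^ 2) with
    (sqrt (a1 ^ 2 + a2 ^ 2) ^ 2 + sqrt (b1 ^ 2 + b2 ^ 2) ^ 2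
     + 2 * (sqrt (a1 ^ 2 + a2 ^ 2) * sqrt (b1 ^ 2 + b2 ^ 2))) by ring.
  rewrite !pow2_sqrt by auto. nra.
Qed.

Lemma cdist_diff_le : forall z a b, Rabs (cdist z a - cdist z b) <= cdist a b.
Proof.
  intros z a b. apply Rabs_le. split.
  - pose proof (cdist_triangle z a b). lra.
  - pose proof (cdist_triangle z b a). rewrite (cdist_sym b a) in H. lra.
Qed.

Fixpoint zeros_dist (l1 l2 : list R) : R :=
  match l1, l2 with
  | a :: l1', b :: l2' => cdist (cexp_i a) (cexp_i b) + zeros_dist l1' l2'
  | _, _ => 0
  end.

Lemma zeros_dist_nonneg : forall l1 l2, 0 <= zeros_dist l1 l2.
Proof.
  induction l1; destruct l2; simpl; try lra.
  pose proof (cdist_nonneg (cexp_i a) (cexp_i r)). pose proof (IHl1 l2). lra.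
Qed.

Lemma Pcirc_lipschitz_zeros : forall l1 l2, length l1 = length l2 -> forall t,
  Rabs (Pcirc l1 t - Pcirc l2 t) <= 2 ^ length l1 * zeros_dist l1 l2.
Proof.
  induction l1 as [|a l1 IH]; intros [|b l2] Hl t; simpl in Hl; try lia.
  - unfold Pcirc; simpl. rewrite Rminus_diag, Rabs_R0. lra.
  - injection Hl as Hl. unfold Pcirc; simpl. fold (Pcirc l1 t). fold (Pcirc l2 t).
    set (x := cdist (cexp_i t) (cexp_i a)). set (y := cdist (cexp_i t) (cexp_i b)).
    pose proof (cdist_diff_le (cexp_i t) (cexp_i a) (cexp_i b)) as Hxy.
    replace (x * Pcirc l1 t - y * Pcirc l2 t)
      with ((x - y) * Pcirc l1 t + y * (Pcirc l1 t - Pcirc l2 t)) by ring.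
    eapply Rle_trans; [apply Rabs_triang|]. rewrite !Rabs_mult.
    pose proof (Pcirc_le_pow l1 t). assert (0 <= Pcirc l1 t) by apply Pabs_nonneg.
    pose proof (cdist_nonneg (cexp_i t) (cexp_i b)). pose proof (cdist_cexp_le_2 t b).
    rewrite (Rabs_right (Pcirc l1 t)) by lra. rewrite (Rabs_right y) by (unfold y; lra).
    specialize (IH l2 Hl t).
    pose proof (zeros_dist_nonneg l1 l2). pose proof (pow_le 2 (length l1) ltac:(lra)).
    assert (Rabs (x - y) * Pcirc l1 t <= cdist (cexp_i a) (cexp_i b) * 2 ^ length l1)
      by (apply Rmult_le_compat; auto using Rabs_pos).
    assert (y * Rabs (Pcirc l1 t - Pcirc l2 t) <= 2 * (2 ^ length l1 * zeros_dist l1 l2))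
      by (apply Rmult_le_compat; auto using Rabs_pos; unfold y; lra).
    assert (0 <= cdist (cexp_i a) (cexp_i b) * 2 ^ length l1)
      by (apply Rmult_le_pos; auto using cdist_nonneg).
    lra.
Qed.

Lemma Pcirc_angle_mod : forall ths t, Pcirc (map angle_mod ths) t = Pcirc ths t.
Proof.
  induction ths as [|th ths IH]; intros t; unfold Pcirc in *; simpl; auto.
  rewrite cexp_angle_mod, IH. reflexivity.
Qed.

Definition strictly_increasing (phi : nat -> nat) : Prop := forall n, (phi n < phi (S n))%nat.

Lemma strictly_increasing_ge : forall phi, strictly_increasing phi -> forall n, (n <= phi n)%nat.
Proof. intros phi H n; induction n; [lia|]. specialize (H n). lia. Qed.

Lemma strictly_increasing_lt : forall phi, strictly_increasing phi ->
  forall a b, (a < b)%nat -> (phi a < phi b)%nat.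
Proof. intros phi H a b Hab. induction Hab; [apply H|]. specialize (H m). lia. Qed.

Lemma strictly_increasing_comp : forall phi psi, strictly_increasing phi ->
  strictly_increasing psi -> strictly_increasing (fun n => phi (psi n)).
Proof. intros phi psi Hphi Hpsi n. apply strictly_increasing_lt; auto. Qed.

Lemma Un_cv_subseq : forall (v : nat -> R) l phi, strictly_increasing phi ->
  Un_cv v l -> Un_cv (fun n => v (phi n)) l.
Proof.
  intros v l phi Hphi Hv eps Heps. destruct (Hv eps Heps) as [N HN]. exists N.
  intros n Hn. apply HN. pose proof (strictly_increasing_ge phi Hphi n). lia.
Qed.

(* Bolzano-Weierstrass gives an accumulation point [l]; the subsequence picks, after
   [phi n], an index within [1 / (n + 1)] of [l]. *)
Lemma bolzano_subseq : forall (u : nat -> R), (forall n, 0 <= u n <= 2 * PI) ->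
  exists phi, strictly_increasing phi /\ exists l, Un_cv (fun n => u (phi n)) l.
Proof.
  intros u Hu.
  destruct (Bolzano_Weierstrass u (fun x => 0 <= x <= 2 * PI) (compact_P3 _ _) Hu) as [l Hl].
  assert (Hch : forall N k, exists p, (N <= p)%nat /\ Rabs (u p - l) < / (INR k + 1)).
  { intros N k.
    assert (Hd : 0 < / (INR k + 1)) by (apply Rinv_0_lt_compat; pose proof (pos_INR k); lra).
    destruct (Hl (disc l (mkposreal _ Hd)) N) as [p [Hp Hv]];
      [exists (mkposreal _ Hd); intros y Hy; auto|].
    exists p. split; auto. }
  set (pick := fun N k => proj1_sig (constructive_indefinite_description _ (Hch N k))).
  assert (Hpick : forall N k, (N <= pick N k)%nat /\ Rabs (u (pick N k) - l) < / (INR k + 1))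
    by (intros N k; apply (proj2_sig (constructive_indefinite_description _ (Hch N k)))).
  set (phi := fix phi n := match n with O => pick O O | S n => pick (S (phi n)) (S n) end).
  exists phi. split.
  - intros n. simpl. destruct (Hpick (S (phi n)) (S n)). lia.
  - exists l. intros eps Heps.
    destruct (INR_unbounded (/ eps)) as [N HN].
    exists N. intros n Hn. unfold Rdist.
    assert (Hphi : Rabs (u (phi n) - l) < / (INR n + 1)) by (destruct n; simpl; apply Hpick).
    eapply Rlt_le_trans; [apply Hphi|].
    assert (INR N <= INR n) by (apply le_INR; lia).
    assert (0 < / eps) by (apply Rinv_0_lt_compat; auto).
    rewrite <- (Rinv_inv eps). apply Rinv_le_contravar; lra.
Qed.

(* Extract coordinates one at a time: a subsequence for the tail, then a further one for the
   head. *)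
Lemma zeros_subseq_cv : forall m (u : nat -> list R),
  (forall n, length (u n) = m /\ forall x, In x (u n) -> 0 <= x <= 2 * PI) ->
  exists phi, strictly_increasing phi /\
    exists l, length l = m /\ Un_cv (fun n => zeros_dist (u (phi n)) l) 0.
Proof.
  induction m as [|m IH]; intros u Hu.
  - exists (fun n => n). split; [intros n; lia|]. exists []. split; auto.
    intros eps Heps. exists O. intros n _. destruct (Hu n) as [Hl _].
    destruct (u n); simpl in Hl; [|lia]. simpl. unfold Rdist. rewrite Rminus_diag, Rabs_R0. auto.
  - destruct (IH (fun n => tl (u n))) as [phi1 [Hphi1 [l1 [Hl1 Hcv1]]]].
    { intros n. destruct (Hu n) as [Hl Hx]. destruct (u n) as [|a r]; simpl in Hl; [lia|].
      simpl. split; [lia|]. intros; apply Hx; simpl; auto. }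
    destruct (bolzano_subseq (fun n => hd 0 (u (phi1 n)))) as [phi2 [Hphi2 [a Hcva]]].
    { intros n. destruct (Hu (phi1 n)) as [Hl Hx].
      destruct (u (phi1 n)) as [|b r]; simpl in Hl; [lia|]. apply Hx; simpl; auto. }
    exists (fun n => phi1 (phi2 n)). split; [apply strictly_increasing_comp; auto|].
    exists (a :: l1). split; [simpl; lia|].
    assert (Hcva' : Un_cv (fun n => cdist (cexp_i (hd 0 (u (phi1 (phi2 n))))) (cexp_i a)) 0).
    { pose proof (continuity_seq _ _ a (continuity_cdist_cexp a a) Hcva) as Hs.
      cbv beta in Hs. rewrite cdist_refl in Hs. exact Hs. }
    pose proof (Un_cv_subseq _ _ _ Hphi2 Hcv1) as Hcv1'.
    eapply Un_cv_ext; [|rewrite <- (Rplus_0_r 0); apply (CV_plus _ _ _ _ Hcva' Hcv1')].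
    intros n. simpl. destruct (Hu (phi1 (phi2 n))) as [Hl _].
    destruct (u (phi1 (phi2 n))) as [|b r]; simpl in Hl; [lia|]. reflexivity.
Qed.

(** * Bounds on [E_m(2 alpha)] and the value of [delta_m] *)

Lemma inv_succ_cv_0 : Un_cv (fun n => / (INR n + 1)) 0.
Proof.
  intros eps Heps. destruct (INR_unbounded (/ eps)) as [N HN]. exists N. intros n Hn.
  unfold Rdist. rewrite Rminus_0_r.
  assert (INR N <= INR n) by (apply le_INR; lia).
  assert (0 < / eps) by (apply Rinv_0_lt_compat; auto).
  rewrite Rabs_right by (left; apply Rinv_0_lt_compat; pose proof (pos_INR n); lra).
  rewrite <- (Rinv_inv eps). apply Rinv_lt_contravar; [apply Rmult_lt_0_compat|]; lra.
Qed.

(* A closed piece of the sublevel set of measure exactly [2 alpha] gives an admissible arc. *)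
Lemma E_alpha_lt_of_sublevel : forall m alpha hs, (1 <= m)%nat -> 0 < alpha ->
  E_alpha m alpha hs -> forall ths h, length ths = m ->
  2 * alpha < mu (fun t => 0 <= t < 2 * PI /\ Pcirc ths t < h) -> hs < h.
Proof.
  intros m alpha hs Hm Ha Hhs ths h Hl Hlt.
  destruct (Pcirc_level_finite ths h ltac:(lia)) as [Z HZ].
  destruct (closed_sublevel_inner (Pcirc ths) (continuity_Pcirc ths) h Z HZ (2 * alpha) Hlt)
    as [K [HK [HKb [HKf HKmu]]]].
  destruct (mu_truncation_exact K (2 * alpha)) as [s Hs]; auto; try lra.
  { intros t Kt; specialize (HKb t Kt); lra. }
  set (K' := fun t => K t /\ t <= s).
  assert (HK' : closed_set K') by (apply closed_set_inter; auto; apply closed_set_le).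
  assert (HK'b : forall t, K' t -> 0 <= t < 2 * PI) by (intros t [Kt _]; auto).
  assert (HK'ne : exists t, K' t).
  { apply NNPP. intro Hn. rewrite mu_empty in Hs; [lra|]. intros t Kt. apply Hn; eauto. }
  destruct (E_Q_arc_set m K' ths HK' HK'b HK'ne Hl) as [e [He [t0 [[Kt0 _] Het0]]]].
  assert (hs <= e); [|specialize (HKf t0 Kt0); lra].
  destruct Hhs as [Hlb _]. apply Hlb. exists (arc_set K').
  split; [apply compact_in_circle_arc_set; auto|]. split; auto.
  rewrite <- Hs. apply arc_measure_arc_set; auto.
Qed.

Lemma E_alpha_exists : forall m alpha, 0 < alpha < PI -> exists h, E_alpha m alpha h.
Proof.
  intros m alpha Ha. unfold E_alpha. apply glb_exists.
  - set (K := fun t => 0 <= t <= 2 * alpha).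
    assert (HKb : forall t, K t -> 0 <= t < 2 * PI) by (intros t Ht; unfold K in Ht; lra).
    destruct (E_Q_arc_set m K (repeat 0 m) (closed_set_interval _ _) HKb
                ltac:(exists 0; unfold K; lra) (repeat_length _ _)) as [e [He _]].
    exists e, (arc_set K). split; [apply compact_in_circle_arc_set; auto; apply closed_set_interval|].
    split; auto.
    replace (2 * alpha) with (mu K); [apply arc_measure_arc_set; auto|].
    assert (mu K <= 2 * alpha - 0) by (apply mu_le_interval; [lra|auto]).
    assert (2 * alpha - 0 <= mu K) by (apply mu_ge_interval; auto; apply bounded_interval).
    lra.
  - exists 0. intros v [Q [_ [_ [_ Hglb]]]]. apply Hglb.
    intros w [ths [_ [[z [_ ->]] _]]]. apply Pabs_nonneg.
Qed.

(* An admissible arc of measure [2 alpha] cannot fit inside the small set [{|P| < r}] of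
   [mu_sublevel_small]. *)
Lemma E_alpha_pos : forall m alpha hs, (1 <= m)%nat -> 0 < alpha -> E_alpha m alpha hs ->
  0 < hs.
Proof.
  intros m alpha hs Hm Ha Hhs.
  destruct (mu_sublevel_small m Hm alpha Ha) as [r [Hr Hsmall]].
  assert (r <= hs); [|lra].
  destruct Hhs as [_ Hg]. apply Hg. intros v [Q [HQ [Harc [_ HEg]]]]. apply HEg.
  intros w [ths [Hl [Hw Hmax]]]. apply Rnot_lt_le. intro Hwr.
  assert (mu (fun t => 0 <= t < 2 * PI /\ Q (cexp_i t))
          <= mu (fun t => 0 <= t < 2 * PI /\ Pcirc ths t < r)).
  { apply mu_mono; [apply bounded_in_period|]. intros t [Ht Qt]. split; auto.
    assert (Pcirc ths t <= w) by (apply Hmax; exists (cexp_i t); auto). lra. }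
  rewrite (mu_unique _ _ Harc) in H. specialize (Hsmall ths Hl). lra.
Qed.

(* [z^m - 1] has modulus [< 2] off a finite subset of the circle. *)
Lemma E_alpha_lt_2 : forall m alpha hs, (1 <= m)%nat -> 0 < alpha < PI -> E_alpha m alpha hs ->
  hs < 2.
Proof.
  intros m alpha hs Hm Ha Hhs.
  apply (E_alpha_lt_of_sublevel m alpha hs Hm ltac:(lra) Hhs (unity_args m) 2
           (unity_args_length m)).
  destruct (Pcirc_level_finite (unity_args m) 2 ltac:(rewrite unity_args_length; lia))
    as [Z HZ].
  assert (2 * PI <= mu (fun t => 0 <= t < 2 * PI /\ Pcirc (unity_args m) t < 2)); [|lra].
  rewrite <- mu_period at 1.
  eapply Rle_trans; [apply (mu_le_remove_finite _ Z); exists 0, (2 * PI); intros; lra|].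
  apply mu_mono; [apply bounded_in_period|]. intros t [Ht HnZ]. split; auto.
  pose proof (Pabs_unity_le_2 m Hm t). destruct (Req_dec (Pcirc (unity_args m) t) 2) as [E|E].
  - exfalso. apply HnZ, HZ; auto; lra.
  - unfold Pcirc in *. lra.
Qed.

Lemma delta_lower_bound : forall m alpha hs, (1 <= m)%nat -> 0 < alpha -> E_alpha m alpha hs ->
  forall ths, length ths = m ->
  2 * PI - 2 * alpha <= mu (fun t => 0 <= t < 2 * PI /\ Pcirc ths t >= hs).
Proof.
  intros m alpha hs Hm Ha Hhs ths Hl. apply Rnot_lt_le. intro Hlt.
  assert (2 * alpha < mu (fun t => 0 <= t < 2 * PI /\ Pcirc ths t < hs)).
  { assert (2 * PI <= mu (fun t => 0 <= t < 2 * PI /\ Pcirc ths t < hs)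
                    + mu (fun t => 0 <= t < 2 * PI /\ Pcirc ths t >= hs)); [|lra].
    rewrite <- mu_period at 1.
    eapply Rle_trans; [|apply mu_union_le; apply bounded_in_period].
    apply mu_mono; [apply bounded_union; apply bounded_in_period|].
    intros t Ht. destruct (Rlt_dec (Pcirc ths t) hs); [left|right]; split; auto; lra. }
  pose proof (E_alpha_lt_of_sublevel m alpha hs Hm Ha Hhs ths hs Hl H). lra.
Qed.

Lemma E_alpha_near_optimal : forall m alpha hs, E_alpha m alpha hs -> forall eps, 0 < eps ->
  exists ths, (length ths = m /\ forall x, In x ths -> 0 <= x <= 2 * PI) /\
    2 * alpha <= mu (fun t => 0 <= t < 2 * PI /\ Pcirc ths t <= hs + eps).
Proof.
  intros m alpha hs Hhs eps Heps.
  destruct (glb_approx _ _ Hhs (eps / 2) ltac:(lra)) as [v [[Q [HQ [Harc HEQ]]] Hv]].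
  destruct (glb_approx _ _ HEQ (eps / 2) ltac:(lra)) as [w [[ths [Hl [_ Hmax]]] Hw]].
  exists (map angle_mod ths). split.
  - split; [rewrite length_map; auto|]. intros x Hx. apply in_map_iff in Hx.
    destruct Hx as [y [<- _]]. pose proof (angle_mod_range y). lra.
  - rewrite <- (mu_unique _ _ Harc). apply mu_mono; [apply bounded_in_period|].
    intros t [Ht Qt]. split; auto. rewrite Pcirc_angle_mod.
    assert (Pcirc ths t <= w) by (apply Hmax; exists (cexp_i t); auto). lra.
Qed.

(* The sublevel bound passes to the limit because [Pcirc] is Lipschitz in the zeros. *)
Lemma mu_sublevel_limit : forall (v : nat -> list R) l e a hs,
  (forall n, length (v n) = length l) -> Un_cv (fun n => zeros_dist (v n) l) 0 -> Un_cv e 0 ->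
  (forall n, a <= mu (fun t => 0 <= t < 2 * PI /\ Pcirc (v n) t <= hs + e n)) ->
  forall eta, 0 < eta -> a <= mu (fun t => 0 <= t < 2 * PI /\ Pcirc l t <= hs + eta).
Proof.
  intros v l e a hs Hlen Hv He Ha eta Heta.
  assert (Hp : 0 < 2 ^ length l) by (apply pow_lt; lra).
  destruct (Hv (eta / 2 / 2 ^ length l)) as [N1 HN1]; [apply Rdiv_lt_0_compat; lra|].
  destruct (He (eta / 2)) as [N2 HN2]; [lra|].
  set (n := max N1 N2).
  specialize (HN1 n ltac:(unfold n; lia)). specialize (HN2 n ltac:(unfold n; lia)).
  unfold Rdist in HN1, HN2. rewrite Rminus_0_r in HN1, HN2.
  rewrite Rabs_right in HN1 by (apply Rle_ge, zeros_dist_nonneg).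
  assert (Hs : 2 ^ length l * zeros_dist (v n) l <= eta / 2).
  { apply Rmult_le_reg_r with (/ 2 ^ length l); [apply Rinv_0_lt_compat; auto|].
    rewrite Rmult_comm, <- Rmult_assoc, Rinv_l, Rmult_1_l by lra. unfold Rdiv in HN1. lra. }
  eapply Rle_trans; [apply (Ha n)|]. apply mu_mono; [apply bounded_in_period|].
  intros t [Ht Hft]. split; auto.
  pose proof (Pcirc_lipschitz_zeros (v n) l (Hlen n) t) as Hlip. rewrite Hlen in Hlip.
  pose proof (Rle_abs (Pcirc l t - Pcirc (v n) t)). rewrite Rabs_minus_sym in Hlip.
  apply Rabs_def2 in HN2. lra.
Qed.

(* A limit of nearly optimal polynomials attains the infimum defining [delta_m]. *)
Lemma delta_attained : forall m alpha hs, (1 <= m)%nat -> E_alpha m alpha hs ->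
  exists ths, length ths = m /\
    mu (fun t => 0 <= t < 2 * PI /\ Pcirc ths t >= hs) <= 2 * PI - 2 * alpha.
Proof.
  intros m alpha hs Hm Hhs.
  assert (Hopt : forall n, exists ths, _) by (intro n; apply (E_alpha_near_optimal m alpha hs Hhs
    (/ (INR n + 1))); apply Rinv_0_lt_compat; pose proof (pos_INR n); lra).
  destruct (choice _ Hopt) as [u Hu].
  destruct (zeros_subseq_cv m u (fun n => proj1 (Hu n))) as [phi [Hphi [l [Hl Hcv]]]].
  exists l. split; auto.
  destruct (Pcirc_level_finite l hs ltac:(lia)) as [Z HZ].
  apply (mu_superlevel_le (Pcirc l) (continuity_Pcirc l) hs Z HZ).
  apply (mu_sublevel_limit (fun n => u (phi n)) l (fun n => / (INR (phi n) + 1))); auto.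
  - intro n. destruct (Hu (phi n)) as [[-> _] _]. auto.
  - apply (Un_cv_subseq (fun n => / (INR n + 1))); auto using inv_succ_cv_0.
  - intro n. apply (Hu (phi n)).
Qed.

Lemma delta_E_alpha : forall m alpha hs, (1 <= m)%nat -> 0 < alpha -> E_alpha m alpha hs ->
  delta m hs (2 * PI - 2 * alpha).
Proof.
  intros m alpha hs Hm Ha Hhs. split.
  - intros v [ths [Hl Hv]]. rewrite <- (mu_unique _ _ Hv).
    apply (delta_lower_bound m alpha hs Hm Ha Hhs ths Hl).
  - intros b Hb. destruct (delta_attained m alpha hs Hm Hhs) as [ths [Hl Hmu]].
    eapply Rle_trans; [|apply Hmu]. apply Hb. exists ths. split; auto.
    apply mu_spec, bounded_in_period.
Qed.

Theorem theorem3 (m : nat) (alpha : R) :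
  (1 <= m)%nat -> 0 < alpha < PI ->
  (exists h, E_alpha m alpha h) /\
  (forall h, E_alpha m alpha h ->
     0 < h < 2 /\ delta m h (2 * PI - 2 * alpha)).
Proof.
  intros Hm Ha. split; [apply E_alpha_exists; auto|].
  intros h Hh. split; [split|].
  - apply (E_alpha_pos m alpha h Hm ltac:(lra) Hh).
  - apply (E_alpha_lt_2 m alpha h Hm Ha Hh).
  - apply (delta_E_alpha m alpha h Hm ltac:(lra) Hh).
Qed.
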